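(* Let $S\subseteq N$ with $|S|=k\ge2$ and suppose that for all $v\in S$ and all distinct $i,j\in N$, $$\frac{\partial^2(-\log p_{v,S}(\theta))}{\partial\theta_i\partial\theta_j}\Big|_{\theta=\mathbf 0}\le0.$$ Then for every $y\in S$, $$\big\|\nabla^2(-\log p_{y,S}(\theta))|_{\theta=\mathbf 0}\big\|_2\le k^4\Big(\frac{\partial p_k(\mathbf 0)}{\partial x_1}\Big)^2.$$
   Context: $F$ is a CDF of a zero-mean random variable with continuously differentiable density $f$, $f(x)\to0$ as $|x|\to\infty$, with differentiation under the integral sign permitted. $p_k(x)=\int_{\mathbb R}\prod_{v=1}^{k-1}F(x_v+z)f(z)dz$ for $x\in\mathbb R^{k-1}$; $p_{y,S}(\theta)=p_k((\theta_y-\theta_u)_{u\in S\setminus\{y\}})$ for $\theta\in\mathbb R^n$; $\frac{\partial p_k(\mathbf 0)}{\partial x_1}=\int f(z)^2F(z)^{k-2}dz$. $\|\cdot\|_2$ is the spectral norm. *)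

From Stdlib Require Import Reals Lra Lia List Arith ClassicalEpsilon.
Open Scope R_scope.

Fixpoint fsum (n : nat) (g : nat -> R) : R :=
  match n with O => 0 | S m => fsum m g + g m end.
Fixpoint fprod (n : nat) (g : nat -> R) : R :=
  match n with O => 1 | S m => fprod m g * g m end.

Definition improper_int (g : R -> R) (L : R) : Prop :=
  (forall a b, a <= b -> inhabited (Riemann_integrable g a b)) /\
  forall eps, 0 < eps -> exists M, 0 < M /\
    forall a b (pr : Riemann_integrable g a b),
      a <= - M -> M <= b -> Rabs (RiemannInt pr - L) < eps.

(* the value of the improper integral (0 if it does not exist) *)
Definition Iint (g : R -> R) : R :=
  epsilon (inhabits 0) (fun L => improper_int g L).

Definition is_cdf_with_density (F f : R -> R) : Prop :=
  (forall x, 0 <= f x) /\ improper_int f 1 /\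
  forall x, (forall a, a <= x -> inhabited (Riemann_integrable f a x)) /\
    forall eps, 0 < eps -> exists M, 0 < M /\
      forall a (pr : Riemann_integrable f a x), a <= - M ->
        Rabs (RiemannInt pr - F x) < eps.

(* p_m(x) = int prod_{v<m} F(x_v + z) f(z) dz   (paper's p_k with m = k-1;
   coordinates x_1..x_{k-1} of the paper are x 0 .. x (m-1) here) *)
Definition pk_integrand (F f : R -> R) (m : nat) (x : nat -> R) (z : R) : R :=
  fprod m (fun v => F (x v + z)) * f z.
Definition pk (F f : R -> R) (m : nat) (x : nat -> R) : R :=
  Iint (pk_integrand F f m x).

(* partial derivatives of the integrand with respect to x_i, and x_i x_j *)
Definition d1_integrand (F f : R -> R) (m i : nat) (x : nat -> R) (z : R) : R :=
  f (x i + z) * fprod m (fun v => if Nat.eqb v i then 1 else F (x v + z)) * f z.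
Definition d2_integrand (F f f' : R -> R) (m i j : nat) (x : nat -> R) (z : R) : R :=
  if Nat.eqb i j then
    f' (x i + z) * fprod m (fun v => if Nat.eqb v i then 1 else F (x v + z)) * f z
  else
    f (x i + z) * f (x j + z) *
    fprod m (fun v => if orb (Nat.eqb v i) (Nat.eqb v j) then 1 else F (x v + z)) * f z.

Definition upd (th : nat -> R) (i : nat) (t : R) : nat -> R :=
  fun j => if Nat.eqb j i then th j + t else th j.

Definition is_partial (phi : (nat -> R) -> R) (i : nat) (th : nat -> R) (l : R) : Prop :=
  derivable_pt_lim (fun t => phi (upd th i t)) 0 l.

(* "differentiation under the integral sign is permitted" for p_m, up to
   second order: all integrals exist, and derivatives of the integral are
   the integrals of the derivatives of the integrand. *)
Definition dui_permitted (F f f' : R -> R) (m : nat) : Prop :=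
  forall x : nat -> R,
    (exists L, improper_int (pk_integrand F f m x) L) /\
    forall i, (i < m)%nat ->
      (exists L, improper_int (d1_integrand F f m i x) L) /\
      is_partial (pk F f m) i x (Iint (d1_integrand F f m i x)) /\
      forall j, (j < m)%nat ->
        (exists L, improper_int (d2_integrand F f f' m i j x) L) /\
        is_partial (fun x' => Iint (d1_integrand F f m j x')) i x
                   (Iint (d2_integrand F f f' m i j x)).

Definition pyS (F f : R -> R) (S : list nat) (y : nat) (th : nat -> R) : R :=
  let L := remove Nat.eq_dec y S in
  pk F f (length L) (fun v => th y - th (nth v L 0%nat)).

Definition is_hessian (n : nat) (phi : (nat -> R) -> R) (th0 : nat -> R)
  (H : nat -> nat -> R) : Prop :=
  exists delta, 0 < delta /\ exists D : nat -> (nat -> R) -> R,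
    (forall j, (j < n)%nat -> forall th, (forall l, Rabs (th l - th0 l) < delta) ->
        is_partial phi j th (D j th)) /\
    (forall i j, (i < n)%nat -> (j < n)%nat -> is_partial (D j) i th0 (H i j)).

Definition opnorm_set (n : nat) (H : nat -> nat -> R) (r : R) : Prop :=
  exists x : nat -> R, fsum n (fun j => x j ^ 2) <= 1 /\
    r = sqrt (fsum n (fun i => (fsum n (fun j => H i j * x j)) ^ 2)).
Definition is_spectral_norm (n : nat) (H : nat -> nat -> R) (s : R) : Prop :=
  is_lub (opnorm_set n H) s.

(* With x = (theta_y - theta_u)_{u in S \ {y}} one has p_{y,S}(theta) = p_m(x), m = k - 1, so the
   Hessian of -log p_{y,S} at 0 vanishes outside S x S and is an explicit rational function of
   p_m(0) = 1/k, of d p_m(0)/dx_i = G := int f^2 F^(k-2), and of the diagonal and off-diagonal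
   second derivatives a, b of p_m at 0.  Integrating the derivative of f^2 F^(k-2) gives the
   relation 2a + (k-2)b = 0.  Since theta_y moves every coordinate of x at once, the derivatives
   in that direction are obtained by differentiating under the integral along the diagonal, from
   a first-order expansion of the integrand.  The sign hypothesis on the off-diagonal entries
   (y, u) and (u, u') then bounds every absolute row sum of the (symmetric) Hessian by k^4 G^2,
   and the Schur test bounds the spectral norm by the same quantity. *)

From Stdlib Require Import Reals Lra Lia List Arith ClassicalEpsilon FunctionalExtensionality.
From Coquelicot Require Import Coquelicot.
Open Scope R_scope.

Lemma fsum_ext n g h : (forall i, (i < n)%nat -> g i = h i) -> fsum n g = fsum n h.
Proof. induction n; simpl; intros; auto. rewrite IHn, H; auto; lia. Qed.

Lemma fprod_ext n g h : (forall i, (i < n)%nat -> g i = h i) -> fprod n g = fprod n h.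
Proof. induction n; simpl; intros; auto. rewrite IHn, H; auto; lia. Qed.

Lemma fsum_add n g h : fsum n (fun i => g i + h i) = fsum n g + fsum n h.
Proof. induction n; simpl; [ring|rewrite IHn; ring]. Qed.

Lemma fsum_scal n c g : fsum n (fun i => c * g i) = c * fsum n g.
Proof. induction n; simpl; [ring|rewrite IHn; ring]. Qed.

Lemma fsum_sub n g h : fsum n (fun i => g i - h i) = fsum n g - fsum n h.
Proof.
  rewrite (fsum_ext n _ (fun i => g i + -1 * h i)) by (intros; ring).
  rewrite fsum_add, fsum_scal; ring.
Qed.

Lemma fsum_const n c : fsum n (fun _ => c) = INR n * c.
Proof. induction n; simpl fsum; [simpl; ring|rewrite IHn, S_INR; ring]. Qed.

Lemma fsum_0 n : fsum n (fun _ => 0) = 0.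
Proof. rewrite fsum_const; ring. Qed.

Lemma fsum_le n g h : (forall i, (i < n)%nat -> g i <= h i) -> fsum n g <= fsum n h.
Proof. induction n; simpl; intros; [lra|]. apply Rplus_le_compat; auto. Qed.

Lemma fsum_nonneg n g : (forall i, (i < n)%nat -> 0 <= g i) -> 0 <= fsum n g.
Proof. intros; rewrite <- (fsum_0 n); apply fsum_le; auto. Qed.

Lemma Rabs_fsum_le n g : Rabs (fsum n g) <= fsum n (fun i => Rabs (g i)).
Proof.
  induction n; simpl. rewrite Rabs_R0; lra.
  eapply Rle_trans; [apply Rabs_triang|lra].
Qed.

Lemma fsum_delta n a g : (a < n)%nat -> fsum n (fun j => if Nat.eqb j a then g j else 0) = g a.
Proof.
  induction n; intros Ha; [lia|]. simpl.
  destruct (Nat.eq_dec a n) as [->|Hne].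
  - rewrite Nat.eqb_refl, (fsum_ext n _ (fun _ => 0)), fsum_0; [ring|].
    intros i Hi. destruct (Nat.eqb_spec i n); [lia|auto].
  - rewrite IHn by lia. destruct (Nat.eqb_spec n a); [lia|ring].
Qed.

Lemma fsum_split_at n g u : (u < n)%nat ->
  fsum n g = g u + fsum n (fun i => if Nat.eqb i u then 0 else g i).
Proof.
  intro Hu. rewrite <- (fsum_delta n u g Hu), <- fsum_add. apply fsum_ext.
  intros i Hi. destruct (Nat.eqb i u); ring.
Qed.

Lemma fsum_const_except n u c : (u < n)%nat ->
  fsum n (fun i => if Nat.eqb i u then 0 else c) = (INR n - 1) * c.
Proof.
  intro Hu. assert (H := fsum_split_at n (fun _ => c) u Hu). rewrite fsum_const in H. lra.
Qed.

Lemma fsum_shift n g : fsum (S n) g = g O + fsum n (fun i => g (S i)).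
Proof. induction n; simpl in *; [ring|]. rewrite IHn. ring. Qed.

Lemma fsum_comm n m (g : nat -> nat -> R) :
  fsum n (fun i => fsum m (fun j => g i j)) = fsum m (fun j => fsum n (fun i => g i j)).
Proof. induction n; simpl. rewrite fsum_0; auto. rewrite IHn, <- fsum_add. auto. Qed.

Lemma fprod_const n c : fprod n (fun _ => c) = c ^ n.
Proof. induction n; simpl; auto. rewrite IHn. ring. Qed.

Lemma fprod_in_01 n g : (forall i, (i < n)%nat -> 0 <= g i <= 1) -> 0 <= fprod n g <= 1.
Proof.
  induction n; simpl; intros; [lra|].
  assert (A := IHn ltac:(intros; apply H; lia)). assert (B := H n ltac:(lia)).
  split; [apply Rmult_le_pos; lra|]. replace 1 with (1*1) by ring.
  apply Rmult_le_compat; lra.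
Qed.

Lemma Rabs_fprod_sub_le n a b : (forall i, (i < n)%nat -> 0 <= a i <= 1) ->
  (forall i, (i < n)%nat -> 0 <= b i <= 1) ->
  Rabs (fprod n b - fprod n a) <= fsum n (fun i => Rabs (b i - a i)).
Proof.
  induction n; intros Ha Hb; simpl. rewrite Rminus_diag, Rabs_R0; lra.
  assert (IH := IHn ltac:(intros; apply Ha; lia) ltac:(intros; apply Hb; lia)).
  assert (A := fprod_in_01 n a ltac:(intros; apply Ha; lia)).
  assert (An := Ha n ltac:(lia)). assert (Bn := Hb n ltac:(lia)).
  replace (fprod n b * b n - fprod n a * a n) with
    ((fprod n b - fprod n a) * b n + fprod n a * (b n - a n)) by ring.
  eapply Rle_trans; [apply Rabs_triang|]. rewrite !Rabs_mult.
  rewrite (Rabs_right (b n)), (Rabs_right (fprod n a)) by lra.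
  pose proof (Rabs_pos (fprod n b - fprod n a)); pose proof (Rabs_pos (b n - a n)).
  apply Rplus_le_compat; nra.
Qed.

Definition fprod_omit (n i : nat) (a : nat -> R) : R :=
  fprod n (fun v => if Nat.eqb v i then 1 else a v).

Lemma fprod_omit_in_01 n i a : (forall v, (v < n)%nat -> 0 <= a v <= 1) ->
  0 <= fprod_omit n i a <= 1.
Proof. intro H. apply fprod_in_01. intros v Hv. destruct (Nat.eqb v i); [lra|auto]. Qed.

Lemma fprod_omit_const n i c : (i < n)%nat ->
  fprod n (fun v => if Nat.eqb v i then 1 else c) = c ^ pred n.
Proof.
  induction n; intro Hi; [lia|]. simpl fprod.
  destruct (Nat.eqb_spec n i) as [->|Hne].
  - rewrite (fprod_ext i _ (fun _ => c)), fprod_const. simpl. ring.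
    intros v Hv. destruct (Nat.eqb_spec v i); [lia|auto].
  - rewrite IHn by lia. destruct n; [lia|]. simpl. ring.
Qed.

Lemma fprod_omit2_const n i j c : (i < n)%nat -> (j < n)%nat -> i <> j ->
  fprod n (fun v => if (Nat.eqb v i || Nat.eqb v j)%bool then 1 else c) = c ^ pred (pred n).
Proof.
  induction n; intros Hi Hj Hij; [lia|]. simpl fprod.
  destruct (Nat.eqb_spec n i) as [->|Hne].
  - simpl. rewrite (fprod_ext i _ (fun v => if Nat.eqb v j then 1 else c)).
    + rewrite fprod_omit_const by lia. ring.
    + intros v Hv. destruct (Nat.eqb_spec v i); [lia|auto].
  - destruct (Nat.eqb_spec n j) as [->|Hne2].
    + simpl. rewrite (fprod_ext j _ (fun v => if Nat.eqb v i then 1 else c)).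
      * rewrite fprod_omit_const by lia. ring.
      * intros v Hv. destruct (Nat.eqb_spec v j); [lia|]. rewrite Bool.orb_false_r. auto.
    + simpl. rewrite IHn by lia. destruct n; [lia|]. destruct n; [lia|]. simpl. ring.
Qed.

Lemma Rabs_fprod_linearization_le n a c :
  (forall i, (i < n)%nat -> 0 <= a i <= 1) ->
  (forall i, (i < n)%nat -> 0 <= a i + c i <= 1) ->
  Rabs (fprod n (fun v => a v + c v) - fprod n a - fsum n (fun i => c i * fprod_omit n i a))
    <= (fsum n (fun i => Rabs (c i))) ^ 2.
Proof.
  induction n; intros Ha Hc; simpl fprod; simpl fsum.
  { replace (1 - 1 - 0) with 0 by ring. rewrite Rabs_R0; lra. }
  assert (IH := IHn ltac:(intros; apply Ha; lia) ltac:(intros; apply Hc; lia)).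
  assert (Hsum : fsum n (fun i => c i * fprod_omit (S n) i a) =
                 fsum n (fun i => c i * fprod_omit n i a) * a n).
  { rewrite Rmult_comm, <- fsum_scal. apply fsum_ext. intros i Hi.
    unfold fprod_omit. simpl. destruct (Nat.eqb_spec n i); [lia|]. ring. }
  assert (Hlast : fprod_omit (S n) n a = fprod n a).
  { unfold fprod_omit; simpl. rewrite Nat.eqb_refl, Rmult_1_r. apply fprod_ext.
    intros i Hi. destruct (Nat.eqb_spec i n); [lia|auto]. }
  rewrite Hsum, Hlast.
  set (B := fprod n (fun v => a v + c v)) in *. set (A := fprod n a) in *.
  set (Sm := fsum n (fun i => c i * fprod_omit n i a)) in *.
  set (T := fsum n (fun i => Rabs (c i))) in *.
  assert (An := Ha n ltac:(lia)).
  assert (HBA : Rabs (B - A) <= T).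
  { unfold B, A, T. rewrite (fsum_ext n _ (fun i => Rabs ((a i + c i) - a i))).
    - apply Rabs_fprod_sub_le; intros; [apply Ha|apply Hc]; lia.
    - intros; f_equal; ring. }
  replace (B * (a n + c n) - A * a n - (Sm * a n + c n * A)) with
    ((B - A - Sm) * a n + c n * (B - A)) by ring.
  eapply Rle_trans; [apply Rabs_triang|]. rewrite !Rabs_mult, (Rabs_right (a n)) by lra.
  assert (T0 : 0 <= T) by (apply fsum_nonneg; intros; apply Rabs_pos).
  pose proof (Rabs_pos (c n)); pose proof (Rabs_pos (B - A - Sm)).
  assert (Rabs (B - A - Sm) * a n <= T ^ 2) by nra.
  assert (Rabs (c n) * Rabs (B - A) <= Rabs (c n) * T) by nra.
  nra.
Qed.

Lemma Rabs_fprod_increment_le n a b w eta e :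
  (forall i, (i < n)%nat -> 0 <= a i <= 1) -> (forall i, (i < n)%nat -> 0 <= b i <= 1) ->
  (forall i, (i < n)%nat -> Rabs (b i - a i) <= eta) ->
  (forall i, (i < n)%nat -> Rabs (b i - a i - w i) <= e) ->
  Rabs (fprod n b - fprod n a - fsum n (fun i => w i * fprod_omit n i a))
    <= (INR n * eta) ^ 2 + INR n * e.
Proof.
  intros Ha Hb Heta He.
  set (c := fun i => b i - a i).
  assert (Eb : fprod n b = fprod n (fun v => a v + c v)) by (apply fprod_ext; intros; unfold c; ring).
  assert (Hlin := Rabs_fprod_linearization_le n a c Ha
                    ltac:(intros; unfold c; replace (a i + (b i - a i)) with (b i) by ring; auto)).
  assert (Hc : 0 <= fsum n (fun i => Rabs (c i)) <= INR n * eta).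
  { split; [apply fsum_nonneg; intros; apply Rabs_pos|]. rewrite <- fsum_const. apply fsum_le. auto. }
  assert (Hw : Rabs (fsum n (fun i => (c i - w i) * fprod_omit n i a)) <= INR n * e).
  { eapply Rle_trans; [apply Rabs_fsum_le|]. rewrite <- fsum_const. apply fsum_le. intros i Hi.
    rewrite Rabs_mult. pose proof (fprod_omit_in_01 n i a Ha).
    rewrite (Rabs_right (fprod_omit n i a)) by lra.
    pose proof (Rabs_pos (c i - w i)). specialize (He i Hi). fold (c i) in He. nra. }
  replace (fprod n b - fprod n a - fsum n (fun i => w i * fprod_omit n i a)) with
    ((fprod n (fun v => a v + c v) - fprod n a - fsum n (fun i => c i * fprod_omit n i a))
     + fsum n (fun i => (c i - w i) * fprod_omit n i a)).
  2:{ assert (E : fsum n (fun i => (c i - w i) * fprod_omit n i a) =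
        fsum n (fun i => c i * fprod_omit n i a) - fsum n (fun i => w i * fprod_omit n i a))
        by (rewrite <- fsum_sub; apply fsum_ext; intros; ring).
      rewrite E, Eb. ring. }
  eapply Rle_trans; [apply Rabs_triang|]. apply Rplus_le_compat; [|auto].
  eapply Rle_trans; [exact Hlin|]. apply pow_incr. lra.
Qed.

Lemma fsum_weighted_Cauchy_Schwarz n w a : (forall j, (j < n)%nat -> 0 <= w j) ->
  (fsum n (fun j => w j * a j)) ^ 2 <= fsum n w * fsum n (fun j => w j * a j ^ 2).
Proof.
  induction n; intros Hw; [simpl; lra|]. cbn [fsum].
  assert (IH := IHn ltac:(intros; apply Hw; lia)).
  assert (W0 := fsum_nonneg n w ltac:(intros; apply Hw; lia)).
  assert (Y0 := fsum_nonneg n (fun j => w j * a j ^ 2)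
                  ltac:(intros; apply Rmult_le_pos; [apply Hw; lia|apply pow2_ge_0])).
  set (X := fsum n (fun j => w j * a j)) in *. set (W := fsum n w) in *.
  set (Y := fsum n (fun j => w j * a j ^ 2)) in *.
  assert (Hwn := Hw n ltac:(lia)).
  assert (Hcross : 2 * X * a n <= W * a n * a n + Y).
  { destruct (Req_dec W 0) as [HW0|HW0].
    - assert (HX : X = 0).
      { rewrite HW0 in IH. apply Rsqr_0_uniq. unfold Rsqr. pose proof (Rle_0_sqr X).
        unfold Rsqr in *. lra. }
      rewrite HX, HW0. lra.
    - assert (W * (W * a n * a n + Y - 2 * X * a n) >= 0).
      { replace (W * (W * a n * a n + Y - 2 * X * a n))
          with ((W * a n - X) * (W * a n - X) + (W * Y - X ^ 2)) by ring.
        pose proof (Rle_0_sqr (W * a n - X)). unfold Rsqr in *. lra. }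
      nra. }
  assert (w n * (2 * X * a n) <= w n * (W * a n * a n + Y)) by (apply Rmult_le_compat_l; auto).
  replace ((X + w n * a n) ^ 2) with (X ^ 2 + w n * (2 * X * a n) + w n * w n * a n * a n) by ring.
  replace ((W + w n) * (Y + w n * a n ^ 2))
    with (W * Y + w n * (W * a n * a n + Y) + w n * w n * a n * a n) by ring.
  lra.
Qed.

Lemma fsum_Schur_test n (H : nat -> nat -> R) B x : 0 <= B ->
  (forall i, (i < n)%nat -> fsum n (fun j => Rabs (H i j)) <= B) ->
  (forall j, (j < n)%nat -> fsum n (fun i => Rabs (H i j)) <= B) ->
  fsum n (fun i => (fsum n (fun j => H i j * x j)) ^ 2) <= B * B * fsum n (fun j => x j ^ 2).
Proof.
  intros HB HR HC.
  assert (Hrow : forall i, (i < n)%nat ->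
      (fsum n (fun j => H i j * x j)) ^ 2 <= B * fsum n (fun j => Rabs (H i j) * x j ^ 2)).
  { intros i Hi.
    assert (A1 : (fsum n (fun j => H i j * x j)) ^ 2 <= (fsum n (fun j => Rabs (H i j) * Rabs (x j))) ^ 2).
    { rewrite <- !Rsqr_pow2. apply Rsqr_le_abs_1. eapply Rle_trans; [apply Rabs_fsum_le|].
      rewrite (Rabs_right (fsum n (fun j => Rabs (H i j) * Rabs (x j)))).
      - apply fsum_le; intros; rewrite Rabs_mult; lra.
      - apply Rle_ge, fsum_nonneg; intros; apply Rmult_le_pos; apply Rabs_pos. }
    eapply Rle_trans; [exact A1|].
    eapply Rle_trans; [apply fsum_weighted_Cauchy_Schwarz; intros; apply Rabs_pos|]. cbv beta.
    rewrite (fsum_ext n (fun j => Rabs (H i j) * Rabs (x j) ^ 2) (fun j => Rabs (H i j) * x j ^ 2)).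
    - apply Rmult_le_compat_r; [|apply HR; auto].
      apply fsum_nonneg; intros; apply Rmult_le_pos; [apply Rabs_pos|apply pow2_ge_0].
    - intros j _. rewrite <- !Rsqr_pow2, <- Rsqr_abs. auto. }
  eapply Rle_trans; [apply fsum_le; exact Hrow|].
  rewrite fsum_scal, Rmult_assoc. apply Rmult_le_compat_l; auto.
  rewrite (fsum_comm n n (fun i j => Rabs (H i j) * x j ^ 2)), <- fsum_scal.
  apply fsum_le. intros j Hj.
  rewrite (fsum_ext n (fun i => Rabs (H i j) * x j ^ 2) (fun i => x j ^ 2 * Rabs (H i j))), fsum_scal
    by (intros; ring).
  rewrite Rmult_comm. apply Rmult_le_compat_r; [apply pow2_ge_0|]. apply HC; auto.
Qed.

Lemma spectral_norm_le_Schur n H B s : 0 <= B ->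
  (forall i, (i < n)%nat -> fsum n (fun j => Rabs (H i j)) <= B) ->
  (forall j, (j < n)%nat -> fsum n (fun i => Rabs (H i j)) <= B) ->
  is_spectral_norm n H s -> s <= B.
Proof.
  intros HB HR HC Hs. apply (proj2 Hs). intros r [x [Hx ->]].
  rewrite <- (sqrt_square B) by auto. apply sqrt_le_1_alt.
  assert (Hsum := fsum_Schur_test n H B x HB HR HC).
  assert (B * B * fsum n (fun j => x j ^ 2) <= B * B * 1) by (apply Rmult_le_compat_l; nra).
  lra.
Qed.

Lemma is_hessian_entry n phi H i j (G : (nat -> R) -> R) l delta :
  is_hessian n phi (fun _ => 0) H -> (i < n)%nat -> (j < n)%nat -> 0 < delta ->
  (forall th, (forall k, Rabs (th k) < delta) -> is_partial phi j th (G th)) ->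
  derivable_pt_lim (fun t => G (upd (fun _ => 0) i t)) 0 l -> H i j = l.
Proof.
  intros [d [Hd [D [HD HH]]]] Hi Hj Hdelta HG Hl.
  set (r := Rmin d delta).
  assert (Hr : 0 < r) by (apply Rmin_glb_lt; auto).
  assert (Hball : forall t k, Rabs t < r -> Rabs (upd (fun _ => 0) i t k) < Rmin d delta).
  { intros t k Ht. unfold upd. destruct (Nat.eqb k i); [rewrite Rplus_0_l|rewrite Rabs_R0]; auto. }
  apply (uniqueness_limite (fun t => D j (upd (fun _ => 0) i t)) 0); [apply HH; auto|].
  apply (derivable_pt_lim_locally_ext (fun t => G (upd (fun _ => 0) i t)) _ 0 (- r) r); [lra| |auto].
  intros t Ht. assert (Hrt : Rabs t < r) by (apply Rabs_def1; lra).
  apply (uniqueness_limite (fun s => phi (upd (upd (fun _ => 0) i t) j s)) 0).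
  - apply HG. intro k. pose proof (Hball t k Hrt). pose proof (Rmin_r d delta). lra.
  - apply HD; auto. intro k. rewrite Rminus_0_r. pose proof (Hball t k Hrt). pose proof (Rmin_l d delta). lra.
Qed.

Definition lsum (l : list nat) (g : nat -> R) : R := fold_right (fun j acc => g j + acc) 0 l.

Lemma lsum_remove l y g : NoDup l -> In y l -> lsum l g = g y + lsum (remove Nat.eq_dec y l) g.
Proof.
  induction 1; simpl; [tauto|]. intros [->|Hin].
  - destruct (Nat.eq_dec y y); [|tauto]. rewrite notin_remove; auto.
  - destruct (Nat.eq_dec y x) as [->|]; [tauto|]. simpl. rewrite IHNoDup; auto. ring.
Qed.

Lemma lsum_nth l g : lsum l g = fsum (length l) (fun p => g (nth p l 0%nat)).
Proof.
  induction l; [auto|].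
  change (g a + lsum l g = fsum (S (length l)) (fun p => g (nth p (a :: l) 0%nat))).
  rewrite fsum_shift, IHl. auto.
Qed.

Lemma fsum_eq_lsum n l g : NoDup l -> (forall j, In j l -> (j < n)%nat) ->
  (forall j, (j < n)%nat -> ~ In j l -> g j = 0) -> fsum n g = lsum l g.
Proof.
  intros Hnd Hn Hz.
  rewrite (fsum_ext n g (fun j => if in_dec Nat.eq_dec j l then g j else 0))
    by (intros j Hj; destruct (in_dec Nat.eq_dec j l); auto).
  clear Hz. induction Hnd; simpl.
  { apply fsum_0. }
  rewrite <- IHHnd by (intros; apply Hn; simpl; auto).
  rewrite <- (fsum_delta n x g) by (apply Hn; simpl; auto).
  rewrite <- fsum_add. apply fsum_ext. intros j Hj.
  destruct (Nat.eq_dec x j) as [->|Hne].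
  - rewrite Nat.eqb_refl. destruct (in_dec Nat.eq_dec j l); [tauto|]. ring.
  - destruct (Nat.eqb_spec j x); [congruence|]. destruct (in_dec Nat.eq_dec j l); ring.
Qed.

Lemma length_remove_NoDup l y : NoDup l -> In y l ->
  length (remove Nat.eq_dec y l) = (length l - 1)%nat.
Proof.
  induction 1; simpl; [tauto|]. intros [->|Hin].
  - destruct (Nat.eq_dec y y); [|tauto]. rewrite notin_remove; auto. lia.
  - destruct (Nat.eq_dec y x) as [->|]; [tauto|]. simpl. rewrite IHNoDup; auto.
    destruct l; simpl in *; [tauto|lia].
Qed.

Lemma NoDup_remove_nat l y : NoDup l -> NoDup (remove Nat.eq_dec y l).
Proof.
  induction 1; simpl; [constructor|].
  destruct (Nat.eq_dec y x); auto. constructor; auto.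
  intro Hin. apply in_remove in Hin. tauto.
Qed.

Lemma derivable_pt_lim_comp_opp g l : derivable_pt_lim g 0 l ->
  derivable_pt_lim (fun t => g (- t)) 0 (- l).
Proof.
  intro H. apply (derivable_pt_lim_mirr_fwd g 0 (- l)).
  rewrite Ropp_0, Ropp_involutive. exact H.
Qed.

Lemma derivable_pt_lim_opp_ln g l : derivable_pt_lim g 0 l -> 0 < g 0 ->
  derivable_pt_lim (fun t => - ln (g t)) 0 (- (l / g 0)).
Proof.
  intros H Hp. apply (derivable_pt_lim_opp (fun t => ln (g t))).
  replace (l / g 0) with (/ g 0 * l) by (unfold Rdiv; ring).
  apply (derivable_pt_lim_comp g ln 0 l (/ g 0)); auto. apply derivable_pt_lim_ln; auto.
Qed.

Lemma derivable_pt_lim_fsum k (g : nat -> R -> R) l :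
  (forall i, (i < k)%nat -> derivable_pt_lim (g i) 0 (l i)) ->
  derivable_pt_lim (fun t => fsum k (fun i => g i t)) 0 (fsum k l).
Proof.
  induction k; intros H; simpl.
  - apply derivable_pt_lim_const.
  - apply (derivable_pt_lim_plus (fun t => fsum k (fun i => g i t)) (g k)); auto.
Qed.

Lemma derivable_pt_lim_of_remainder_le (g : R -> R) l :
  (forall eps, 0 < eps -> exists d, 0 < d /\
     forall t, Rabs t < d -> Rabs (g t - g 0 - t * l) <= Rabs t * eps) ->
  derivable_pt_lim g 0 l.
Proof.
  intros H eps He. destruct (H (eps/2) ltac:(lra)) as [d [Hd Hb]].
  exists (mkposreal d Hd). intros h Hh Hhd. simpl in Hhd. specialize (Hb h Hhd).
  rewrite Rplus_0_l.
  replace ((g h - g 0) / h - l) with ((g h - g 0 - h * l) / h) by (field; auto).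
  unfold Rdiv. rewrite Rabs_mult, Rabs_inv.
  assert (0 < Rabs h) by (apply Rabs_pos_lt; auto).
  apply (Rmult_le_compat_r (/ Rabs h)) in Hb; [|left; apply Rinv_0_lt_compat; auto].
  replace (Rabs h * (eps / 2) * / Rabs h) with (eps/2) in Hb by (field; lra). lra.
Qed.

Lemma remainder_le_of_derivable_pt_lim g l : derivable_pt_lim g 0 l ->
  forall eps, 0 < eps -> exists d, 0 < d /\
    forall t, Rabs t < d -> Rabs (g t - g 0 - t * l) <= Rabs t * eps.
Proof.
  intros H eps He. destruct (H eps He) as [d Hd]. exists d. split; [apply cond_pos|].
  intros t Ht. destruct (Req_dec t 0) as [->|Hne].
  - replace (g 0 - g 0 - 0 * l) with 0 by ring. rewrite !Rabs_R0. lra.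
  - specialize (Hd t Hne Ht). rewrite Rplus_0_l in Hd.
    replace (g t - g 0 - t * l) with (t * ((g t - g 0) / t - l)) by (field; auto).
    rewrite Rabs_mult. apply Rmult_le_compat_l; [apply Rabs_pos|lra].
Qed.

Lemma choose_small_parameters C1 C2 eps : 0 <= C1 -> 0 <= C2 -> 0 < eps ->
  exists e d, 0 < e /\ 0 < d /\ forall t, Rabs t < d -> C1 * e + C2 * Rabs t <= eps.
Proof.
  intros H1 H2 He. exists (eps / (2 * (C1 + 1))), (eps / (2 * (C2 + 1))).
  split; [apply Rdiv_lt_0_compat; lra|]. split; [apply Rdiv_lt_0_compat; lra|].
  intros t Ht.
  assert (C1 * (eps / (2 * (C1 + 1))) <= eps / 2).
  { apply (Rmult_le_reg_r (2 * (C1 + 1))); [lra|].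
    replace (C1 * (eps / (2 * (C1 + 1))) * (2 * (C1 + 1))) with (C1 * eps) by (field; lra). nra. }
  assert (C2 * Rabs t <= eps / 2).
  { apply Rle_trans with (C2 * (eps / (2 * (C2 + 1)))); [apply Rmult_le_compat_l; lra|].
    apply (Rmult_le_reg_r (2 * (C2 + 1))); [lra|].
    replace (C2 * (eps / (2 * (C2 + 1))) * (2 * (C2 + 1))) with (C2 * eps) by (field; lra). nra. }
  lra.
Qed.

Lemma improper_int_unique g L1 L2 : improper_int g L1 -> improper_int g L2 -> L1 = L2.
Proof.
  intros [Hi1 H1] [_ H2].
  destruct (Req_dec L1 L2) as [|Hne]; auto.
  set (e := Rabs (L1 - L2) / 2).
  assert (He : 0 < e) by (assert (0 < Rabs (L1 - L2)) by (apply Rabs_pos_lt; lra); unfold e; lra).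
  destruct (H1 e He) as [M1 [HM1 H1']]; destruct (H2 e He) as [M2 [HM2 H2']].
  destruct (Hi1 (-(M1+M2)) (M1+M2) ltac:(lra)) as [pr].
  specialize (H1' _ _ pr ltac:(lra) ltac:(lra)). specialize (H2' _ _ pr ltac:(lra) ltac:(lra)).
  assert (Rabs (L1 - L2) <= Rabs (RiemannInt pr - L1) + Rabs (RiemannInt pr - L2)).
  { replace (L1 - L2) with (-(RiemannInt pr - L1) + (RiemannInt pr - L2)) by ring.
    eapply Rle_trans; [apply Rabs_triang|]. rewrite Rabs_Ropp; lra. }
  unfold e in *. lra.
Qed.

Lemma Iint_eq g L : improper_int g L -> Iint g = L.
Proof.
  intro H. unfold Iint.
  apply (improper_int_unique g); [|exact H].
  exact (epsilon_spec (inhabits 0) (fun L => improper_int g L) (ex_intro _ L H)).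
Qed.

Lemma improper_int_Iint g : (exists L, improper_int g L) -> improper_int g (Iint g).
Proof. intros [L H]. rewrite (Iint_eq _ _ H). exact H. Qed.

Lemma improper_int_ext g h L : (forall z, g z = h z) -> improper_int g L -> improper_int h L.
Proof. intros E H. replace h with g; auto. apply functional_extensionality; auto. Qed.

Lemma Iint_ext g h : (forall z, g z = h z) -> Iint g = Iint h.
Proof. intros E. replace h with g; auto. apply functional_extensionality; auto. Qed.

Lemma improper_int_0 : improper_int (fun _ => 0) 0.
Proof.
  split.
  - intros a b _. constructor. apply (RiemannInt_P14 a b 0).
  - intros eps He. exists 1. split; [lra|]. intros a b pr Ha Hb.
    rewrite (RiemannInt_P18 pr (RiemannInt_P14 a b 0)) by (intros; reflexivity || lra).
    rewrite RiemannInt_P15. rewrite Rmult_0_l, Rminus_0_r, Rabs_R0. exact He.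
Qed.

Lemma improper_int_lin g1 g2 L1 L2 c : improper_int g1 L1 -> improper_int g2 L2 ->
  improper_int (fun z => g1 z + c * g2 z) (L1 + c * L2).
Proof.
  intros [I1 H1] [I2 H2]. split.
  - intros a b Hab. destruct (I1 a b Hab) as [p1]; destruct (I2 a b Hab) as [p2].
    constructor. apply RiemannInt_P10; auto.
  - intros eps He.
    destruct (H1 (eps/2) ltac:(lra)) as [M1 [HM1 H1']].
    assert (Hc : 0 < eps / (2 * (Rabs c + 1))).
    { apply Rdiv_lt_0_compat; [lra|]. pose proof (Rabs_pos c); lra. }
    destruct (H2 _ Hc) as [M2 [HM2 H2']].
    exists (M1 + M2). split; [lra|]. intros a b pr Ha Hb.
    assert (Hab : a <= b) by lra.
    destruct (I1 a b Hab) as [p1]; destruct (I2 a b Hab) as [p2].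
    rewrite (RiemannInt_P13 p1 p2 pr).
    specialize (H1' a b p1 ltac:(lra) ltac:(lra)). specialize (H2' a b p2 ltac:(lra) ltac:(lra)).
    replace (RiemannInt p1 + c * RiemannInt p2 - (L1 + c * L2))
      with ((RiemannInt p1 - L1) + c * (RiemannInt p2 - L2)) by ring.
    eapply Rle_lt_trans; [apply Rabs_triang|]. rewrite Rabs_mult.
    assert (Rabs c * Rabs (RiemannInt p2 - L2) <= (Rabs c + 1) * (eps / (2 * (Rabs c + 1)))).
    { apply Rmult_le_compat; try apply Rabs_pos; lra. }
    assert ((Rabs c + 1) * (eps / (2 * (Rabs c + 1))) = eps / 2).
    { field. pose proof (Rabs_pos c); lra. }
    lra.
Qed.

Lemma improper_int_scal g L c : improper_int g L -> improper_int (fun z => c * g z) (c * L).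
Proof.
  intro H. apply (improper_int_ext (fun z => 0 + c * g z)); [intro; ring|].
  replace (c * L) with (0 + c * L) by ring. apply improper_int_lin; auto. apply improper_int_0.
Qed.

Lemma improper_int_plus g1 g2 L1 L2 : improper_int g1 L1 -> improper_int g2 L2 ->
  improper_int (fun z => g1 z + g2 z) (L1 + L2).
Proof.
  intros H1 H2. apply (improper_int_ext (fun z => g1 z + 1 * g2 z)); [intro; ring|].
  replace (L1 + L2) with (L1 + 1 * L2) by ring. apply improper_int_lin; auto.
Qed.

Lemma improper_int_minus g1 g2 L1 L2 : improper_int g1 L1 -> improper_int g2 L2 ->
  improper_int (fun z => g1 z - g2 z) (L1 - L2).
Proof.
  intros H1 H2. apply (improper_int_ext (fun z => g1 z + -1 * g2 z)); [intro; ring|].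
  replace (L1 - L2) with (L1 + -1 * L2) by ring. apply improper_int_lin; auto.
Qed.

Lemma improper_int_fsum n (g : nat -> R -> R) L :
  (forall i, (i < n)%nat -> improper_int (g i) (L i)) ->
  improper_int (fun z => fsum n (fun i => g i z)) (fsum n L).
Proof.
  induction n; intros H; simpl.
  - apply improper_int_0.
  - apply (improper_int_plus (fun z => fsum n (fun i => g i z)) (g n)); auto.
Qed.

Lemma improper_int_le g h L1 L2 : (forall z, g z <= h z) ->
  improper_int g L1 -> improper_int h L2 -> L1 <= L2.
Proof.
  intros Hle [I1 H1] [I2 H2].
  destruct (Rle_dec L1 L2) as [|Hn]; auto. exfalso.
  set (e := (L1 - L2)/2).
  destruct (H1 e ltac:(unfold e; lra)) as [M1 [HM1 H1']].
  destruct (H2 e ltac:(unfold e; lra)) as [M2 [HM2 H2']].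
  destruct (I1 (-(M1+M2)) (M1+M2) ltac:(lra)) as [p1].
  destruct (I2 (-(M1+M2)) (M1+M2) ltac:(lra)) as [p2].
  specialize (H1' _ _ p1 ltac:(lra) ltac:(lra)). specialize (H2' _ _ p2 ltac:(lra) ltac:(lra)).
  assert (RiemannInt p1 <= RiemannInt p2) by (apply RiemannInt_P19; auto; lra).
  apply Rabs_def2 in H1'; apply Rabs_def2 in H2'. unfold e in *; lra.
Qed.

Lemma Rabs_improper_int_le r L w W c : improper_int r L -> improper_int w W ->
  (forall z, Rabs (r z) <= c * w z) -> Rabs L <= c * W.
Proof.
  intros Hr Hw Hb.
  assert (Hl : forall z, - c * w z <= r z) by (intro z; specialize (Hb z); apply Rabs_le_between in Hb; lra).
  assert (Hu : forall z, r z <= c * w z) by (intro z; specialize (Hb z); apply Rabs_le_between in Hb; lra).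
  pose proof (improper_int_le _ _ _ _ Hl (improper_int_scal w W (- c) Hw) Hr).
  pose proof (improper_int_le _ _ _ _ Hu Hr (improper_int_scal w W c Hw)).
  apply Rabs_le. lra.
Qed.

Lemma improper_int_of_antiderivative G g LA LB :
  (forall x, derivable_pt_lim G x (g x)) -> (forall x, continuity_pt g x) ->
  (forall e, 0 < e -> exists M, forall x, x <= - M -> Rabs (G x - LA) <= e) ->
  (forall e, 0 < e -> exists M, forall x, M <= x -> Rabs (G x - LB) <= e) ->
  improper_int g (LB - LA).
Proof.
  intros Hd Hc HA HB. split.
  - intros a b Hab. constructor. apply continuity_implies_RiemannInt; auto.
  - intros e He. destruct (HA (e/3) ltac:(lra)) as [MA HMA]. destruct (HB (e/3) ltac:(lra)) as [MB HMB].
    pose proof (Rabs_pos MA); pose proof (Rabs_pos MB).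
    pose proof (Rle_abs MA); pose proof (Rle_abs MB); pose proof (Rle_abs (- MA)).
    rewrite Rabs_Ropp in *.
    exists (Rabs MA + Rabs MB + 1). split; [lra|].
    intros a b pr Ha Hb.
    assert (HRI : RiemannInt pr = G b - G a).
    { rewrite <- RInt_Reals. apply (is_RInt_unique (V:=R_CompleteNormedModule)).
      apply (is_RInt_derive (V:=R_CompleteNormedModule) G g).
      - intros; apply is_derive_Reals; auto.
      - intros; apply continuity_pt_filterlim; auto. }
    rewrite HRI. specialize (HMA a ltac:(lra)). specialize (HMB b ltac:(lra)).
    apply Rabs_le_between in HMA; apply Rabs_le_between in HMB. apply Rabs_def1; lra.
Qed.

(* Differentiation under the integral sign from a pointwise first-order expansion of the
   integrand, with a remainder dominated by an integrable weight [w] (uniformly for each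
   accuracy [e]); [h] is a comparison family whose integral is already known to be differentiable. *)
Lemma derivable_pt_lim_improper_int_expansion (g h : R -> R -> R) (G Hh : R -> R) s ls lh w W C1 C2 :
  (forall t, improper_int (g t) (G t)) -> (forall t, improper_int (h t) (Hh t)) ->
  improper_int s ls -> improper_int w W -> (forall z, 0 <= w z) -> 0 <= C1 -> 0 <= C2 ->
  G 0 = Hh 0 -> derivable_pt_lim Hh 0 lh ->
  (forall e, 0 < e -> exists d, 0 < d /\ forall t, Rabs t < d ->
     forall z, Rabs (g t z - h t z - t * s z) <= Rabs t * (C1 * e + C2 * Rabs t) * w z) ->
  derivable_pt_lim G 0 (lh + ls).
Proof.
  intros Hg Hh' Hs Hw Hw0 HC1 HC2 E0 Hdh Hexp. apply derivable_pt_lim_of_remainder_le. intros eps He.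
  pose proof (Rabs_pos W).
  set (eps' := eps / (2 * (Rabs W + 1))).
  assert (He' : 0 < eps') by (unfold eps'; apply Rdiv_lt_0_compat; lra).
  assert (HW : eps' * Rabs W <= eps / 2).
  { apply (Rmult_le_reg_r (2 * (Rabs W + 1))); [lra|].
    unfold eps'. replace (eps / (2 * (Rabs W + 1)) * Rabs W * (2 * (Rabs W + 1))) with (eps * Rabs W)
      by (field; lra). nra. }
  destruct (choose_small_parameters C1 C2 eps' HC1 HC2 He') as [e [d0 [He0 [Hd0 Hsmall]]]].
  destruct (remainder_le_of_derivable_pt_lim _ _ Hdh (eps / 2) ltac:(lra)) as [d1 [Hd1 Hrem]].
  destruct (Hexp e He0) as [d2 [Hd2 Hexp']].
  exists (Rmin d0 (Rmin d1 d2)). split; [repeat apply Rmin_glb_lt; auto|]. intros t Ht.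
  pose proof (Rmin_l d0 (Rmin d1 d2)); pose proof (Rmin_r d0 (Rmin d1 d2)).
  pose proof (Rmin_l d1 d2); pose proof (Rmin_r d1 d2).
  assert (Hdiff := improper_int_minus _ _ _ _ (improper_int_minus _ _ _ _ (Hg t) (Hh' t))
                     (improper_int_scal _ _ t Hs)).
  assert (Hpt : forall z, Rabs (g t z - h t z - t * s z) <= Rabs t * eps' * w z).
  { intro z. eapply Rle_trans; [apply Hexp'; lra|].
    apply Rmult_le_compat_r; [auto|]. apply Rmult_le_compat_l; [apply Rabs_pos|]. apply Hsmall; lra. }
  assert (HB := Rabs_improper_int_le _ _ _ _ (Rabs t * eps') Hdiff Hw Hpt).
  specialize (Hrem t ltac:(lra)).
  assert (Rabs t * eps' * W <= Rabs t * (eps / 2)).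
  { rewrite Rmult_assoc. apply Rmult_le_compat_l; [apply Rabs_pos|].
    pose proof (Rle_abs W). nra. }
  replace (G t - G 0 - t * (lh + ls)) with ((G t - Hh t - t * ls) + (Hh t - Hh 0 - t * lh))
    by (rewrite E0; ring).
  eapply Rle_trans; [apply Rabs_triang|]. lra.
Qed.

Lemma continuity_pt_pow g x j : continuity_pt g x -> continuity_pt (fun y => g y ^ j) x.
Proof.
  intro H. induction j; simpl.
  - apply continuity_pt_const. intros a b; auto.
  - apply (continuity_pt_mult g (fun y => g y ^ j)); auto.
Qed.

Lemma pow_in_01 y j : 0 <= y <= 1 -> 0 <= y ^ j <= 1.
Proof.
  intro H. induction j; simpl; [lra|]. split; [apply Rmult_le_pos; lra|].
  replace 1 with (1*1) by ring. apply Rmult_le_compat; lra.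
Qed.

Lemma one_sub_pow_le y j : 0 <= y <= 1 -> 1 - y ^ j <= INR j * (1 - y).
Proof.
  intro H. induction j; simpl pow; [simpl; lra|]. rewrite S_INR.
  pose proof (pow_in_01 y j H). nra.
Qed.

(* The absolute row sums of the Hessian, written with [k = m], [K = m + 1], [U = G0^2 K^2],
   [al = a0 K] and [bl = b0 K]. *)
Lemma hessian_abs_sums_le k K U al bl :
  k = 1 \/ 2 <= k -> K = k + 1 -> 0 <= U -> 2 * al + (k - 1) * bl = 0 ->
  al + (k - 1) * bl - k * U <= 0 -> (2 <= k -> U - bl <= 0) ->
  Rabs (k ^ 2 * U - k * (al + (k - 1) * bl)) + k * Rabs (al + (k - 1) * bl - k * U) <= K ^ 2 * U /\
  Rabs (al + (k - 1) * bl - k * U) + Rabs (U - al) + (k - 1) * Rabs (U - bl) <= K ^ 2 * U.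
Proof.
  intros Hk HK HU Hab Hc1 Hc2.
  replace (al + (k - 1) * bl) with (- al) in * by lra.
  replace (k ^ 2 * U - k * - al) with (k * (al + k * U)) by ring.
  replace (- al - k * U) with (- (al + k * U)) in * by ring.
  rewrite Rabs_Ropp, (Rabs_right (al + k * U)) by lra.
  rewrite (Rabs_right (k * (al + k * U))) by (apply Rle_ge, Rmult_le_pos; lra).
  destruct Hk as [->|Hk2].
  - subst K. assert (al = 0) by lra. subst al.
    rewrite (Rabs_right (U - 0)) by lra. split; nra.
  - specialize (Hc2 Hk2).
    assert (Hal : 2 * al <= - (k - 1) * U) by nra.
    rewrite (Rabs_right (U - al)) by nra.
    assert (k * (2 * al + (k - 1) * U) <= 0) by nra.
    assert (0 <= (k + 1) * (k - 1) * U) by (apply Rmult_le_pos; nra).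
    assert (0 <= (k + 1) * U) by (apply Rmult_le_pos; lra).
    assert (Hbl : (k - 1) * (bl - U) = - 2 * al - (k - 1) * U) by lra.
    subst K. split.
    + nra.
    + rewrite Rabs_left1 by lra. nra.
Qed.

Section Density.

Variables F f f' : R -> R.
Hypothesis hf' : forall x, derivable_pt_lim f x (f' x).
Hypothesis hcdf : is_cdf_with_density F f.
Hypothesis hlim : forall eps, 0 < eps -> exists M, forall x, M <= Rabs x -> Rabs (f x) < eps.

Lemma f_continuous x : continuity_pt f x.
Proof. apply derivable_continuous_pt. exists (f' x). apply hf'. Qed.

Lemma f_nonneg x : 0 <= f x.
Proof. apply hcdf. Qed.

Lemma improper_int_f : improper_int f 1.
Proof. apply hcdf. Qed.

Lemma Riemann_integrable_f a b : Riemann_integrable f a b.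
Proof.
  destruct (Rle_dec a b).
  - apply continuity_implies_RiemannInt; auto. intros; apply f_continuous.
  - apply RiemannInt_P1, continuity_implies_RiemannInt; [lra|]. intros; apply f_continuous.
Qed.

Lemma f_bounded : exists Mf, forall x, f x <= Mf.
Proof.
  destruct (hlim 1 ltac:(lra)) as [M HM].
  destruct (continuity_ab_maj f (- Rabs M) (Rabs M) ltac:(pose proof (Rabs_pos M); lra)
     ltac:(intros; apply f_continuous)) as [xm [Hxm _]].
  exists (Rmax 1 (f xm)). intro x. pose proof (Rmax_l 1 (f xm)); pose proof (Rmax_r 1 (f xm)).
  destruct (Rle_dec (Rabs M) (Rabs x)).
  - assert (M <= Rabs x) by (pose proof (Rle_abs M); lra).
    specialize (HM x H1). apply Rabs_def2 in HM. lra.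
  - assert (Hx : Rabs x < Rabs M) by lra. apply Rabs_def2 in Hx.
    assert (f x <= f xm) by (apply Hxm; lra). lra.
Qed.

(* Heine on a compact interval; outside it [f] is uniformly small. *)
Lemma f_uniform_continuity eps : 0 < eps ->
  exists d, 0 < d /\ forall a b, Rabs (a - b) < d -> Rabs (f a - f b) <= eps.
Proof.
  intro He. destruct (hlim (eps/2) ltac:(lra)) as [M HM].
  set (K := Rabs M + 1).
  destruct (Heine_cor2 (f := f) (a := -K) (b := K) ltac:(intros; apply f_continuous)
              (mkposreal eps He)) as [d Hd].
  exists (Rmin d 1). split; [destruct d; simpl; apply Rmin_glb_lt; lra|].
  intros a b Hab. pose proof (Rmin_l d 1); pose proof (Rmin_r d 1). pose proof (Rle_abs M).
  pose proof (Rabs_triang_inv a b); pose proof (Rabs_triang_inv b a).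
  rewrite (Rabs_minus_sym b a) in *.
  destruct (Rle_dec (Rabs a) K) as [Ha|Ha]; destruct (Rle_dec (Rabs b) K) as [Hb|Hb].
  { left. apply Hd; try (apply Rabs_le_between; auto). lra. }
  all: assert (Hfa := HM a ltac:(unfold K in *; lra)); assert (Hfb := HM b ltac:(unfold K in *; lra));
    apply Rabs_def2 in Hfa; apply Rabs_def2 in Hfb; apply Rabs_le; lra.
Qed.

Lemma F_sub_RiemannInt a b (pr : Riemann_integrable f a b) : a <= b -> F b - F a = RiemannInt pr.
Proof.
  intro Hab. apply cond_eq. intros e He.
  destruct hcdf as [_ [_ H3]].
  destruct (H3 a) as [Ia Ha]. destruct (H3 b) as [Ib Hb].
  destruct (Ha (e/2) ltac:(lra)) as [Ma [HMa Ha']].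
  destruct (Hb (e/2) ltac:(lra)) as [Mb [HMb Hb']].
  pose proof (Rle_abs (- a)). rewrite Rabs_Ropp in H.
  set (c := - (Ma + Mb + Rabs a)).
  destruct (Ia c ltac:(unfold c; lra)) as [pa]. destruct (Ib c ltac:(unfold c; lra)) as [pb].
  specialize (Ha' c pa ltac:(unfold c; pose proof (Rabs_pos a); lra)).
  specialize (Hb' c pb ltac:(unfold c; pose proof (Rabs_pos a); lra)).
  rewrite <- (RiemannInt_P26 pa pr pb) in Hb'.
  apply Rabs_def2 in Ha'. apply Rabs_def2 in Hb'. apply Rabs_def1; lra.
Qed.

Lemma RiemannInt_f_nonneg a b (pr : Riemann_integrable f a b) : a <= b -> 0 <= RiemannInt pr.
Proof.
  intro Hab. assert (H := RiemannInt_P19 (RiemannInt_P14 a b 0) pr Hab).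
  rewrite RiemannInt_P15 in H. assert (0 * (b - a) <= RiemannInt pr); [|lra].
  apply H. intros; unfold fct_cte; apply f_nonneg.
Qed.

Lemma F_le a b : a <= b -> F a <= F b.
Proof.
  intro Hab. pose proof (F_sub_RiemannInt a b (Riemann_integrable_f a b) Hab).
  pose proof (RiemannInt_f_nonneg a b (Riemann_integrable_f a b) Hab). lra.
Qed.

Lemma F_nonneg x : 0 <= F x.
Proof.
  apply Rle_plus_epsilon. intros e He.
  destruct hcdf as [_ [_ H3]]. destruct (H3 x) as [Ix Hx].
  destruct (Hx e He) as [M [HM Hx']].
  pose proof (Rabs_pos x). pose proof (Rle_abs (-x)). rewrite Rabs_Ropp in H0.
  destruct (Ix (-(M + Rabs x)) ltac:(lra)) as [p].
  specialize (Hx' _ p ltac:(lra)). apply Rabs_def2 in Hx'.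
  pose proof (RiemannInt_f_nonneg _ _ p ltac:(lra)). lra.
Qed.

Lemma F_le_1 x : F x <= 1.
Proof.
  apply Rle_plus_epsilon. intros e He.
  destruct hcdf as [_ [[I2 H2] H3]].
  destruct (H2 (e/2) ltac:(lra)) as [M2 [HM2 H2']].
  set (b := M2 + Rabs x + 1). pose proof (Rle_abs x). pose proof (Rabs_pos x).
  destruct (H3 b) as [Ib Hb]. destruct (Hb (e/2) ltac:(lra)) as [Mb [HMb Hb']].
  destruct (Ib (-(Mb + M2)) ltac:(unfold b; lra)) as [p].
  specialize (Hb' _ p ltac:(lra)). specialize (H2' _ _ p ltac:(lra) ltac:(unfold b; lra)).
  apply Rabs_def2 in Hb'. apply Rabs_def2 in H2'.
  pose proof (F_le x b ltac:(unfold b; lra)). lra.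
Qed.

Lemma F_in_01 x : 0 <= F x <= 1.
Proof. split; [apply F_nonneg|apply F_le_1]. Qed.

Lemma F_small_at_minus_infty e : 0 < e -> exists M, forall x, x <= - M -> F x <= e.
Proof.
  intro He. destruct hcdf as [_ [[_ H2] _]].
  destruct (H2 e He) as [M2 [HM2 H2']]. exists M2. intros x Hx.
  pose proof (F_sub_RiemannInt x M2 (Riemann_integrable_f x M2) ltac:(lra)).
  specialize (H2' x M2 (Riemann_integrable_f x M2) Hx ltac:(lra)). apply Rabs_def2 in H2'.
  pose proof (F_le_1 M2). lra.
Qed.

Lemma F_close_to_1_at_plus_infty e : 0 < e -> exists M, forall x, M <= x -> 1 - e <= F x.
Proof.
  intro He. destruct hcdf as [_ [[_ H2] _]].
  destruct (H2 e He) as [M2 [HM2 H2']]. exists M2. intros x Hx.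
  pose proof (F_sub_RiemannInt (-M2) x (Riemann_integrable_f (-M2) x) ltac:(lra)).
  specialize (H2' (-M2) x (Riemann_integrable_f (-M2) x) ltac:(lra) Hx). apply Rabs_def2 in H2'.
  pose proof (F_nonneg (-M2)). lra.
Qed.

Lemma derivable_pt_lim_F x : derivable_pt_lim F x (f x).
Proof.
  apply is_derive_Reals.
  apply (is_derive_ext_loc (fun y => F (x-1) + RInt f (x-1) y)).
  - exists (mkposreal 1 ltac:(lra)). intros y Hy. cbv [ball] in Hy; simpl in Hy.
    unfold AbsRing_ball, abs, minus, plus, opp in Hy; simpl in Hy.
    apply Rabs_def2 in Hy.
    rewrite (RInt_Reals f (x-1) y (Riemann_integrable_f _ _)), <- F_sub_RiemannInt; [simpl; ring|lra].
  - apply is_derive_Reals. replace (f x) with (0 + f x) by ring.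
    apply (derivable_pt_lim_plus (fun _ => F (x-1)) (fun y => RInt f (x-1) y)).
    + apply derivable_pt_lim_const.
    + apply is_derive_Reals, is_derive_RInt with (x-1).
      * apply filter_forall. intros b. apply (RInt_correct (V:=R_CompleteNormedModule)).
        apply (ex_RInt_continuous (V:=R_CompleteNormedModule)).
        intros; apply continuity_pt_filterlim, f_continuous.
      * apply continuity_pt_filterlim, f_continuous.
Qed.

Lemma F_continuous x : continuity_pt F x.
Proof. apply derivable_continuous_pt. exists (f x). apply derivable_pt_lim_F. Qed.

Lemma F_mean_value a t : exists c, Rabs (c - a) <= Rabs t /\ F (a + t) - F a = t * f c.
Proof.
  destruct (Rtotal_order t 0) as [Ht|[->|Ht]].
  - destruct (MVT_cor2 F f (a + t) a ltac:(lra) (fun c _ => derivable_pt_lim_F c)) as [c [Hc Hin]].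
    exists c. split; [rewrite Rabs_left, Rabs_left1 by lra; lra|lra].
  - exists a. split; [rewrite Rminus_diag, Rabs_R0; lra|]. rewrite Rplus_0_r. ring.
  - destruct (MVT_cor2 F f a (a + t) ltac:(lra) (fun c _ => derivable_pt_lim_F c)) as [c [Hc Hin]].
    exists c. split; [rewrite !Rabs_right by lra; lra|lra].
Qed.

Lemma F_Lipschitz Mf : (forall x, f x <= Mf) -> forall a b, Rabs (F a - F b) <= Mf * Rabs (a - b).
Proof.
  intros HM a b. destruct (F_mean_value b (a - b)) as [c [_ Hc]].
  replace (b + (a - b)) with a in Hc by ring.
  rewrite Hc, Rabs_mult, (Rabs_right (f c)) by (apply Rle_ge, f_nonneg).
  rewrite (Rmult_comm Mf). apply Rmult_le_compat_l; [apply Rabs_pos|auto].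
Qed.

Lemma F_first_order e : 0 < e -> exists d, 0 < d /\ forall a t, Rabs t < d ->
  Rabs (F (a + t) - F a - t * f a) <= Rabs t * e.
Proof.
  intro He. destruct (f_uniform_continuity e He) as [d [Hd Hu]]. exists d. split; auto.
  intros a t Ht. destruct (F_mean_value a t) as [c [Hca Hc]].
  rewrite Hc. replace (t * f c - t * f a) with (t * (f c - f a)) by ring.
  rewrite Rabs_mult. apply Rmult_le_compat_l; [apply Rabs_pos|]. apply Hu. lra.
Qed.

Lemma improper_int_pow_F_f m : improper_int (fun z => F z ^ m * f z) (/ INR (S m)).
Proof.
  assert (Hk : 0 < INR (S m)) by (apply lt_0_INR; lia).
  assert (Hk' : 0 < / INR (S m)) by (apply Rinv_0_lt_compat; lra).
  apply (improper_int_ext (fun z => / INR (S m) * (INR (S m) * F z ^ m * f z))).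
  { intro z. rewrite <- !Rmult_assoc, Rinv_l by lra. ring. }
  cut (improper_int (fun z => / INR (S m) * (INR (S m) * F z ^ m * f z)) (/ INR (S m) - 0));
    [rewrite Rminus_0_r; auto|].
  apply (improper_int_of_antiderivative (fun z => / INR (S m) * F z ^ (S m))).
  - intro x. apply derivable_pt_lim_scal.
    apply (derivable_pt_lim_comp F (fun y => y ^ (S m)) x (f x) (INR (S m) * F x ^ m)).
    + apply derivable_pt_lim_F.
    + apply (derivable_pt_lim_pow (F x) (S m)).
  - intro x. apply continuity_pt_scal, continuity_pt_mult; [|apply f_continuous].
    apply continuity_pt_mult; [apply continuity_pt_const; intros a b; auto|].
    apply continuity_pt_pow, F_continuous.
  - intros e He. destruct (F_small_at_minus_infty (e * INR (S m)) ltac:(nra)) as [M HM].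
    exists M. intros x Hx. specialize (HM x Hx). rewrite Rminus_0_r.
    pose proof (F_in_01 x) as H01. pose proof (pow_in_01 (F x) m H01).
    replace (F x ^ S m) with (F x * F x ^ m) by (simpl; ring).
    rewrite Rabs_right by (apply Rle_ge, Rmult_le_pos; nra).
    apply (Rmult_le_reg_l (INR (S m))); auto. rewrite <- Rmult_assoc, Rinv_r by lra. nra.
  - intros e He. destruct (F_close_to_1_at_plus_infty e He) as [M HM].
    exists M. intros x Hx. specialize (HM x Hx).
    pose proof (F_in_01 x) as H01. pose proof (one_sub_pow_le (F x) (S m) H01).
    pose proof (pow_in_01 (F x) (S m) H01).
    rewrite Rabs_minus_sym, Rabs_right by nra.
    apply (Rmult_le_reg_l (INR (S m))); auto.
    replace (INR (S m) * (/ INR (S m) - / INR (S m) * F x ^ S m)) with (1 - F x ^ S m)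
      by (field; lra). nra.
Qed.

Lemma f_sq_pow_F_small_at_infty j e : 0 < e ->
  exists M, forall x, M <= Rabs x -> Rabs (f x * f x * F x ^ j - 0) <= e.
Proof.
  intros He. destruct (hlim (Rmin e 1) ltac:(apply Rmin_glb_lt; lra)) as [M HM].
  exists M. intros x Hx. specialize (HM x Hx). rewrite Rminus_0_r.
  pose proof (Rmin_l e 1); pose proof (Rmin_r e 1).
  pose proof (pow_in_01 (F x) j (F_in_01 x)).
  rewrite !Rabs_mult, (Rabs_right (F x ^ j)) by lra.
  pose proof (Rabs_pos (f x)).
  assert (Rabs (f x) * Rabs (f x) <= Rmin e 1 * 1) by (apply Rmult_le_compat; lra).
  assert (Rabs (f x) * Rabs (f x) * F x ^ j <= Rabs (f x) * Rabs (f x) * 1)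
    by (apply Rmult_le_compat_l; nra).
  lra.
Qed.

Hypothesis hf'c : continuity f'.

(* [f^2 F^j] vanishes at both ends, so its derivative integrates to zero. *)
Lemma improper_int_deriv_fsq_pow_F j : improper_int
  (fun z => 2 * (f' z * F z ^ j * f z) + INR j * (f z * f z * F z ^ pred j * f z)) 0.
Proof.
  replace 0 with (0 - 0) by ring.
  apply (improper_int_of_antiderivative (fun z => f z * f z * F z ^ j)).
  - intro x. replace (2 * (f' x * F x ^ j * f x) + INR j * (f x * f x * F x ^ pred j * f x))
      with ((f' x * f x + f x * f' x) * F x ^ j + f x * f x * (INR j * F x ^ pred j * f x)) by ring.
    apply (derivable_pt_lim_mult (fun z => f z * f z) (fun z => F z ^ j)).
    + apply (derivable_pt_lim_mult f f); auto.
    + apply (derivable_pt_lim_comp F (fun y => y ^ j) x (f x) (INR j * F x ^ pred j)).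
      * apply derivable_pt_lim_F.
      * apply derivable_pt_lim_pow.
  - intro x. pose proof f_continuous. pose proof F_continuous.
    apply continuity_pt_plus; apply continuity_pt_scal; repeat apply continuity_pt_mult; auto;
      apply continuity_pt_pow; auto.
  - intros e He. destruct (f_sq_pow_F_small_at_infty j e He) as [M HM]. exists (Rabs M).
    intros x Hx. apply HM. pose proof (Rle_abs M). pose proof (Rle_abs (-x)).
    rewrite Rabs_Ropp in *. lra.
  - intros e He. destruct (f_sq_pow_F_small_at_infty j e He) as [M HM]. exists (Rabs M).
    intros x Hx. apply HM. pose proof (Rle_abs M). pose proof (Rle_abs x). lra.
Qed.

Section Integrals.

Variable m : nat.
Variable Mf : R.
Hypothesis hMf : forall x, f x <= Mf.
Hypothesis hdui : dui_permitted F f f' m.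

Definition pm (x : nat -> R) : R := pk F f m x.
Definition Dpm (i : nat) (x : nat -> R) : R := Iint (d1_integrand F f m i x).
Definition D2pm (i j : nat) (x : nat -> R) : R := Iint (d2_integrand F f f' m i j x).

Lemma improper_int_pm x : improper_int (pk_integrand F f m x) (pm x).
Proof. apply improper_int_Iint, hdui. Qed.

Lemma improper_int_Dpm i x : (i < m)%nat -> improper_int (d1_integrand F f m i x) (Dpm i x).
Proof. intro Hi. apply improper_int_Iint, (proj2 (hdui x) i Hi). Qed.

Lemma is_partial_pm i x : (i < m)%nat -> is_partial pm i x (Dpm i x).
Proof. intro Hi. apply (proj2 (hdui x) i Hi). Qed.

Lemma improper_int_D2pm i j x : (i < m)%nat -> (j < m)%nat ->
  improper_int (d2_integrand F f f' m i j x) (D2pm i j x).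
Proof. intros Hi Hj. apply improper_int_Iint, (proj2 (hdui x) i Hi), Hj. Qed.

Lemma is_partial_Dpm i j x : (i < m)%nat -> (j < m)%nat -> is_partial (Dpm j) i x (D2pm i j x).
Proof. intros Hi Hj. apply (proj2 (hdui x) i Hi), Hj. Qed.

Lemma pm_ext x x' : (forall v, (v < m)%nat -> x v = x' v) -> pm x = pm x'.
Proof.
  intro H. apply Iint_ext. intro z. unfold pk_integrand. f_equal. apply fprod_ext. intros. rewrite H; auto.
Qed.

Lemma Dpm_ext i x x' : (i < m)%nat -> (forall v, (v < m)%nat -> x v = x' v) -> Dpm i x = Dpm i x'.
Proof.
  intros Hi H. apply Iint_ext. intro z. unfold d1_integrand. rewrite H by auto. f_equal. f_equal.
  apply fprod_ext. intros. rewrite H; auto.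
Qed.

Lemma Mf_nonneg : 0 <= Mf.
Proof. pose proof (hMf 0); pose proof (f_nonneg 0); lra. Qed.

Lemma F_increment_le a t : Rabs (F (a + t) - F a) <= Mf * Rabs t.
Proof. eapply Rle_trans; [apply (F_Lipschitz Mf hMf)|]. right. f_equal. f_equal. ring. Qed.

Lemma pk_integrand_expansion x t z e :
  (forall a, Rabs (F (a + t) - F a - t * f a) <= Rabs t * e) ->
  Rabs (pk_integrand F f m (fun v => x v + t) z - pk_integrand F f m x z
        - t * fsum m (fun i => d1_integrand F f m i x z))
  <= Rabs t * (INR m * e + (INR m * Mf) ^ 2 * Rabs t) * f z.
Proof.
  intro Hinc.
  set (a := fun v => F (x v + z)). set (b := fun v => F (x v + t + z)).
  assert (E : t * fsum m (fun i => d1_integrand F f m i x z) =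
              fsum m (fun i => t * f (x i + z) * fprod_omit m i a) * f z).
  { rewrite (Rmult_comm _ (f z)), <- !fsum_scal. apply fsum_ext. intros.
    unfold d1_integrand, fprod_omit, a. ring. }
  rewrite E. unfold pk_integrand. fold a. fold b.
  replace (fprod m b * f z - fprod m a * f z - fsum m (fun i => t * f (x i + z) * fprod_omit m i a) * f z)
    with ((fprod m b - fprod m a - fsum m (fun i => t * f (x i + z) * fprod_omit m i a)) * f z) by ring.
  rewrite Rabs_mult, (Rabs_right (f z)) by (apply Rle_ge, f_nonneg).
  apply Rmult_le_compat_r; [apply f_nonneg|].
  eapply Rle_trans.
  - apply (Rabs_fprod_increment_le m a b _ (Mf * Rabs t) (Rabs t * e)); intros i Hi;
      unfold a, b; replace (x i + t + z) with (x i + z + t) by ring;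
      [apply F_in_01|apply F_in_01|apply F_increment_le|apply Hinc].
  - right. ring.
Qed.

Lemma derivable_pt_lim_pm_diag x :
  derivable_pt_lim (fun t => pm (fun v => x v + t)) 0 (fsum m (fun i => Dpm i x)).
Proof.
  rewrite <- (Rplus_0_l (fsum m (fun i => Dpm i x))).
  apply (derivable_pt_lim_improper_int_expansion
           (fun t => pk_integrand F f m (fun v => x v + t)) (fun _ => pk_integrand F f m x)
           (fun t => pm (fun v => x v + t)) (fun _ => pm x)
           (fun z => fsum m (fun i => d1_integrand F f m i x z)) _ 0 f 1
           (INR m) ((INR m * Mf) ^ 2)).
  - intro t. apply improper_int_pm.
  - intro t. apply improper_int_pm.
  - apply improper_int_fsum. intros. apply improper_int_Dpm; auto.
  - apply improper_int_f.
  - apply f_nonneg.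
  - apply pos_INR.
  - apply pow2_ge_0.
  - apply pm_ext. intros; ring.
  - apply derivable_pt_lim_const.
  - intros e He. destruct (F_first_order e He) as [d [Hd Hinc]].
    exists d. split; auto. intros t Ht z. apply pk_integrand_expansion. auto.
Qed.

Lemma fsum_offdiag_d2_integrand_0 u t z :
  t * fsum m (fun i => if Nat.eqb i u then 0 else d2_integrand F f f' m i u (fun _ => 0) z)
  = f z * fsum m (fun i => (if Nat.eqb i u then 0 else t * f z)
                           * fprod_omit m i (fun v => if Nat.eqb v u then 1 else F z)) * f z.
Proof.
  rewrite (Rmult_comm (f z * _) (f z)), <- !fsum_scal. apply fsum_ext.
  intros i Hi. unfold fprod_omit, d2_integrand. destruct (Nat.eqb_spec i u) as [->|Hne]; [ring|].
  rewrite Rplus_0_l.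
  rewrite (fprod_ext m (fun v => if (Nat.eqb v i || Nat.eqb v u)%bool then 1 else F z)
             (fun v => if Nat.eqb v i then 1 else if Nat.eqb v u then 1 else F z)); [ring|].
  intros v Hv. destruct (Nat.eqb v i); destruct (Nat.eqb v u); auto.
Qed.

Lemma d1_integrand_expansion u t z e : (u < m)%nat ->
  (forall a, Rabs (F (a + t) - F a - t * f a) <= Rabs t * e) -> Rabs (f (t + z) - f z) <= e ->
  Rabs (d1_integrand F f m u (fun _ => t) z - d1_integrand F f m u (upd (fun _ => 0) u t) z
        - t * fsum m (fun i => if Nat.eqb i u then 0 else d2_integrand F f f' m i u (fun _ => 0) z))
  <= Rabs t * (2 * INR m * Mf * e + Mf * (INR m * Mf) ^ 2 * Rabs t) * f z.
Proof.
  intros Hu Hinc Hfu. pose proof Mf_nonneg. pose proof (Rabs_pos t).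
  rewrite fsum_offdiag_d2_integrand_0.
  set (a := fun v => if Nat.eqb v u then 1 else F z).
  set (b := fun v => if Nat.eqb v u then 1 else F (t + z)).
  set (Sw := fsum m (fun i => (if Nat.eqb i u then 0 else t * f z) * fprod_omit m i a)).
  assert (Ha : forall v, (v < m)%nat -> 0 <= a v <= 1)
    by (intros; unfold a; destruct (Nat.eqb v u); [lra|apply F_in_01]).
  assert (Hb : forall v, (v < m)%nat -> 0 <= b v <= 1)
    by (intros; unfold b; destruct (Nat.eqb v u); [lra|apply F_in_01]).
  assert (Hba : forall v, (v < m)%nat -> Rabs (b v - a v) <= Mf * Rabs t).
  { intros v _. unfold a, b. destruct (Nat.eqb v u).
    - rewrite Rminus_diag, Rabs_R0. nra.
    - rewrite Rplus_comm. apply F_increment_le. }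
  assert (E1 : d1_integrand F f m u (fun _ => t) z = f (t + z) * fprod m b * f z) by reflexivity.
  assert (E2 : d1_integrand F f m u (upd (fun _ => 0) u t) z = f (t + z) * fprod m a * f z).
  { unfold d1_integrand, upd. rewrite Nat.eqb_refl, Rplus_0_l. f_equal. f_equal.
    apply fprod_ext. intros v Hv. unfold a. destruct (Nat.eqb v u); [auto|]. f_equal; ring. }
  rewrite E1, E2.
  replace (f (t + z) * fprod m b * f z - f (t + z) * fprod m a * f z - f z * Sw * f z)
    with ((f z * (fprod m b - fprod m a - Sw) + (f (t + z) - f z) * (fprod m b - fprod m a)) * f z)
    by ring.
  rewrite Rabs_mult, (Rabs_right (f z)) by (apply Rle_ge, f_nonneg).
  apply Rmult_le_compat_r; [apply f_nonneg|].
  assert (Hlin : Rabs (fprod m b - fprod m a - Sw) <= (INR m * (Mf * Rabs t)) ^ 2 + INR m * (Rabs t * e)).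
  { apply Rabs_fprod_increment_le; auto. intros i _. unfold a, b. destruct (Nat.eqb i u).
    - replace (1 - 1 - 0) with 0 by ring. rewrite Rabs_R0. pose proof (Rabs_pos (f (t + z) - f z)). nra.
    - rewrite Rplus_comm. apply Hinc. }
  assert (Hdiff : Rabs (fprod m b - fprod m a) <= INR m * (Mf * Rabs t)).
  { eapply Rle_trans; [apply Rabs_fprod_sub_le; auto|]. rewrite <- fsum_const. apply fsum_le. auto. }
  assert (Hfz : 0 <= f z <= Mf) by (split; [apply f_nonneg|apply hMf]).
  eapply Rle_trans; [apply Rabs_triang|]. rewrite !Rabs_mult, (Rabs_right (f z)) by lra.
  pose proof (Rabs_pos (fprod m b - fprod m a - Sw)). pose proof (Rabs_pos (fprod m b - fprod m a)).
  pose proof (Rabs_pos (f (t + z) - f z)). pose proof (pos_INR m).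
  assert (f z * Rabs (fprod m b - fprod m a - Sw)
          <= Mf * ((INR m * (Mf * Rabs t)) ^ 2 + INR m * (Rabs t * e))) by (apply Rmult_le_compat; lra).
  assert (Rabs (f (t + z) - f z) * Rabs (fprod m b - fprod m a) <= e * (INR m * (Mf * Rabs t)))
    by (apply Rmult_le_compat; lra).
  nra.
Qed.

(* [hdui] supplies the derivative in the [u]-th coordinate, the only one that involves [f']; the
   other coordinates of the diagonal direction are handled by expanding the integrand. *)
Lemma derivable_pt_lim_Dpm_diag u : (u < m)%nat ->
  derivable_pt_lim (fun t => Dpm u (fun _ => t)) 0 (fsum m (fun i => D2pm i u (fun _ => 0))).
Proof.
  intro Hu. rewrite (fsum_split_at m _ u Hu).
  apply (derivable_pt_lim_improper_int_expansion
           (fun t => d1_integrand F f m u (fun _ => t)) (fun t => d1_integrand F f m u (upd (fun _ => 0) u t))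
           (fun t => Dpm u (fun _ => t)) (fun t => Dpm u (upd (fun _ => 0) u t))
           (fun z => fsum m (fun i => if Nat.eqb i u then 0 else d2_integrand F f f' m i u (fun _ => 0) z))
           _ _ f 1 (2 * INR m * Mf) (Mf * (INR m * Mf) ^ 2)).
  - intro t. apply improper_int_Dpm; auto.
  - intro t. apply improper_int_Dpm; auto.
  - apply improper_int_fsum. intros i Hi. destruct (Nat.eqb i u);
      [apply improper_int_0|apply improper_int_D2pm; auto].
  - apply improper_int_f.
  - apply f_nonneg.
  - pose proof (pos_INR m); pose proof Mf_nonneg; nra.
  - apply Rmult_le_pos; [apply Mf_nonneg|apply pow2_ge_0].
  - apply Dpm_ext; auto. intros v _. unfold upd. destruct (Nat.eqb v u); ring.
  - apply is_partial_Dpm; auto.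
  - intros e He. destruct (F_first_order e He) as [d1 [Hd1 Hinc]].
    destruct (f_uniform_continuity e He) as [d2 [Hd2 Hunif]].
    exists (Rmin d1 d2). split; [apply Rmin_glb_lt; auto|]. intros t Ht z.
    pose proof (Rmin_l d1 d2); pose proof (Rmin_r d1 d2).
    apply d1_integrand_expansion; auto.
    + intro a. apply Hinc. lra.
    + apply Hunif. replace (t + z - z) with t by ring. lra.
Qed.

(* The values at 0 of the first, diagonal second and off-diagonal second partial derivatives of p_m. *)
Definition G0 : R := Iint (fun z => f z ^ 2 * F z ^ pred m).
Definition a0 : R := Iint (fun z => f' z * F z ^ pred m * f z).
Definition b0 : R := Iint (fun z => f z * f z * F z ^ pred (pred m) * f z).

Lemma pm_0 : pm (fun _ => 0) = / INR (S m).
Proof.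
  rewrite <- (Iint_eq _ _ (improper_int_pow_F_f m)). apply Iint_ext. intro z.
  unfold pk_integrand. rewrite (fprod_ext m _ (fun _ => F z)), fprod_const; [auto|].
  intros; f_equal; ring.
Qed.

Lemma Dpm_0 i : (i < m)%nat -> Dpm i (fun _ => 0) = G0.
Proof.
  intro Hi. apply Iint_ext. intro z. unfold d1_integrand.
  rewrite !Rplus_0_l, fprod_omit_const by auto. ring.
Qed.

Lemma d2_integrand_0_diag i z : (i < m)%nat ->
  d2_integrand F f f' m i i (fun _ => 0) z = f' z * F z ^ pred m * f z.
Proof.
  intro Hi. unfold d2_integrand. rewrite Nat.eqb_refl, !Rplus_0_l, fprod_omit_const by auto. ring.
Qed.

Lemma d2_integrand_0_offdiag i j z : (i < m)%nat -> (j < m)%nat -> i <> j ->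
  d2_integrand F f f' m i j (fun _ => 0) z = f z * f z * F z ^ pred (pred m) * f z.
Proof.
  intros Hi Hj Hij. unfold d2_integrand. destruct (Nat.eqb_spec i j); [lia|].
  rewrite !Rplus_0_l, fprod_omit2_const by auto. ring.
Qed.

Lemma D2pm_0_diag i : (i < m)%nat -> D2pm i i (fun _ => 0) = a0.
Proof. intro Hi. apply Iint_ext. intro z. apply d2_integrand_0_diag; auto. Qed.

Lemma D2pm_0_offdiag i j : (i < m)%nat -> (j < m)%nat -> i <> j -> D2pm i j (fun _ => 0) = b0.
Proof. intros Hi Hj Hij. apply Iint_ext. intro z. apply d2_integrand_0_offdiag; auto. Qed.

Lemma a0_b0_relation : (1 <= m)%nat -> 2 * a0 + (INR m - 1) * b0 = 0.
Proof.
  intro Hm. assert (HI := improper_int_deriv_fsq_pow_F (pred m)).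
  assert (Ha : improper_int (fun z => f' z * F z ^ pred m * f z) a0).
  { rewrite <- (D2pm_0_diag 0 ltac:(lia)).
    apply (improper_int_ext (d2_integrand F f f' m 0 0 (fun _ => 0))).
    - intro z. apply d2_integrand_0_diag; lia.
    - apply improper_int_D2pm; lia. }
  replace (INR m - 1) with (INR (pred m)) by (destruct m; [lia|rewrite S_INR; simpl; ring]).
  destruct (Nat.eq_dec m 1) as [->|Hm2].
  - simpl INR. rewrite Rmult_0_l, Rplus_0_r.
    apply (improper_int_unique (fun z => 2 * (f' z * F z ^ 0 * f z) + 0 * (f z * f z * F z ^ 0 * f z)));
      auto.
    apply (improper_int_ext (fun z => 2 * (f' z * F z ^ 0 * f z))); [intro; ring|].
    apply improper_int_scal, Ha.
  - assert (Hb : improper_int (fun z => f z * f z * F z ^ pred (pred m) * f z) b0).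
    { rewrite <- (D2pm_0_offdiag 0 1 ltac:(lia) ltac:(lia) ltac:(lia)).
      apply (improper_int_ext (d2_integrand F f f' m 0 1 (fun _ => 0))).
      - intro z. apply d2_integrand_0_offdiag; lia.
      - apply improper_int_D2pm; lia. }
    apply (improper_int_unique _ _ _ (improper_int_lin _ _ _ _ (INR (pred m))
                                        (improper_int_scal _ _ 2 Ha) Hb)).
    apply (improper_int_ext _ _ _ (fun z => eq_refl) HI).
Qed.

Lemma pm_Lipschitz x x' eta : (forall v, (v < m)%nat -> Rabs (x v - x' v) <= eta) ->
  Rabs (pm x - pm x') <= INR m * Mf * eta.
Proof.
  intro H. rewrite <- (Rmult_1_r (INR m * Mf * eta)). apply (Rabs_improper_int_le _ _ _ _ _
                    (improper_int_minus _ _ _ _ (improper_int_pm x) (improper_int_pm x'))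
                    improper_int_f).
  intro z. unfold pk_integrand.
  replace (fprod m (fun v => F (x v + z)) * f z - fprod m (fun v => F (x' v + z)) * f z)
    with ((fprod m (fun v => F (x v + z)) - fprod m (fun v => F (x' v + z))) * f z) by ring.
  rewrite Rabs_mult, (Rabs_right (f z)) by (apply Rle_ge, f_nonneg).
  apply Rmult_le_compat_r; [apply f_nonneg|].
  eapply Rle_trans; [apply Rabs_fprod_sub_le; intros; apply F_in_01|].
  rewrite Rmult_assoc, <- fsum_const. apply fsum_le. intros v Hv.
  eapply Rle_trans; [apply (F_Lipschitz Mf hMf)|].
  replace (x v + z - (x' v + z)) with (x v - x' v) by ring.
  apply Rmult_le_compat_l; [apply Mf_nonneg|auto].
Qed.

Definition pm_pos_radius : R := / (2 * (INR m * Mf + 1) * INR (S m)).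

Lemma pm_pos_radius_pos : 0 < pm_pos_radius.
Proof.
  unfold pm_pos_radius. pose proof Mf_nonneg. pose proof (pos_INR m).
  assert (0 < INR (S m)) by (apply lt_0_INR; lia).
  apply Rinv_0_lt_compat. apply Rmult_lt_0_compat; [nra|auto].
Qed.

Lemma pm_pos x : (forall v, (v < m)%nat -> Rabs (x v) <= pm_pos_radius) -> 0 < pm x.
Proof.
  intro H. assert (Hk : 0 < INR (S m)) by (apply lt_0_INR; lia).
  pose proof Mf_nonneg. pose proof (pos_INR m).
  assert (HL := pm_Lipschitz x (fun _ => 0) pm_pos_radius
                  ltac:(intros; rewrite Rminus_0_r; auto)).
  rewrite pm_0 in HL. apply Rabs_le_between in HL.
  assert (INR m * Mf * pm_pos_radius < / INR (S m)); [|lra].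
  assert (0 <= INR m * Mf) by (apply Rmult_le_pos; auto).
  assert (Hd : 0 < 2 * (INR m * Mf + 1) * INR (S m)) by (apply Rmult_lt_0_compat; lra).
  unfold pm_pos_radius.
  apply (Rmult_lt_reg_r (2 * (INR m * Mf + 1) * INR (S m))); auto.
  rewrite Rmult_assoc, Rinv_l by lra.
  replace (/ INR (S m) * (2 * (INR m * Mf + 1) * INR (S m))) with (2 * (INR m * Mf + 1))
    by (field; lra).
  lra.
Qed.

Section Reparametrization.

Variable Sl : list nat.
Variables y n : nat.
Hypothesis hS : NoDup Sl.
Hypothesis hyS : In y Sl.
Hypothesis hSn : forall u, In u Sl -> (u < n)%nat.
Hypothesis hm : length (remove Nat.eq_dec y Sl) = m.

(* The coordinates of [p_{y,S}] are indexed by [p < m], the [p]-th element [Lp p] of [S \ {y}]. *)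
Definition Lp (p : nat) : nat := nth p (remove Nat.eq_dec y Sl) 0%nat.
Definition X (th : nat -> R) : nat -> R := fun v => th y - th (Lp v).

Lemma Lp_in p : (p < m)%nat -> In (Lp p) Sl /\ Lp p <> y.
Proof. intro Hp. apply (in_remove Nat.eq_dec Sl). apply nth_In. lia. Qed.

Lemma Lp_inj p q : (p < m)%nat -> (q < m)%nat -> Lp p = Lp q -> p = q.
Proof.
  intros Hp Hq E.
  apply (proj1 (NoDup_nth (remove Nat.eq_dec y Sl) 0%nat) (NoDup_remove_nat Sl y hS)); auto; lia.
Qed.

Lemma Lp_surj j : In j Sl -> j <> y -> exists p, (p < m)%nat /\ Lp p = j.
Proof.
  intros Hj Hne. destruct (In_nth (remove Nat.eq_dec y Sl) j 0%nat) as [p [Hp E]].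
  - apply in_in_remove; auto.
  - exists p. split; auto. lia.
Qed.

Lemma Lp_lt p : (p < m)%nat -> (Lp p < n)%nat.
Proof. intro Hp. apply hSn, Lp_in, Hp. Qed.

Lemma X_upd_out th j t : ~ In j Sl -> forall v, (v < m)%nat -> X (upd th j t) v = X th v.
Proof.
  intros Hj v Hv. unfold X, upd. destruct (Lp_in v Hv) as [Hin Hne].
  destruct (Nat.eqb_spec y j) as [->|]; [tauto|].
  destruct (Nat.eqb_spec (Lp v) j) as [E|]; [rewrite <- E in Hj; tauto|auto].
Qed.

Lemma X_upd_Lp th p t : (p < m)%nat -> forall v, (v < m)%nat -> X (upd th (Lp p) t) v = upd (X th) p (- t) v.
Proof.
  intros Hp v Hv. unfold X, upd. destruct (Lp_in p Hp) as [Hin Hne].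
  destruct (Nat.eqb_spec y (Lp p)) as [E|]; [congruence|].
  destruct (Nat.eqb_spec (Lp v) (Lp p)) as [E|Hn].
  - apply Lp_inj in E; auto. subst. rewrite Nat.eqb_refl. ring.
  - destruct (Nat.eqb_spec v p); [subst; tauto|auto].
Qed.

Lemma X_upd_y th t : forall v, (v < m)%nat -> X (upd th y t) v = X th v + t.
Proof.
  intros v Hv. unfold X, upd. destruct (Lp_in v Hv) as [Hin Hne]. rewrite Nat.eqb_refl.
  destruct (Nat.eqb_spec (Lp v) y); [tauto|]. ring.
Qed.

Lemma pyS_eq_pm th : pyS F f Sl y th = pm (X th).
Proof. unfold pyS, pm, X, Lp. rewrite hm. reflexivity. Qed.

Definition phi (th : nat -> R) : R := - ln (pyS F f Sl y th).

Lemma is_partial_phi_out th j : ~ In j Sl -> is_partial phi j th 0.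
Proof.
  intro Hj. apply (derivable_pt_lim_ext (fun _ => phi th)); [|apply derivable_pt_lim_const].
  intro t. unfold phi. rewrite !pyS_eq_pm. f_equal. f_equal. apply pm_ext. intros v Hv.
  rewrite X_upd_out; auto.
Qed.

Lemma is_partial_phi_Lp th p : (p < m)%nat -> 0 < pm (X th) ->
  is_partial phi (Lp p) th (Dpm p (X th) / pm (X th)).
Proof.
  intros Hp Hpos. unfold is_partial.
  apply (derivable_pt_lim_ext (fun t => - ln (pm (upd (X th) p (- t))))).
  { intro t. unfold phi. rewrite pyS_eq_pm. f_equal. f_equal. apply pm_ext. intros v Hv.
    rewrite X_upd_Lp; auto. }
  assert (E0 : pm (upd (X th) p (- 0)) = pm (X th)).
  { apply pm_ext. intros v Hv. unfold upd. destruct (Nat.eqb v p); ring. }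
  replace (Dpm p (X th) / pm (X th)) with (- (- Dpm p (X th) / pm (upd (X th) p (- 0))))
    by (rewrite E0; field; lra).
  apply (derivable_pt_lim_opp_ln (fun t => pm (upd (X th) p (- t)))); [|rewrite E0; auto].
  apply (derivable_pt_lim_comp_opp (fun s => pm (upd (X th) p s))), is_partial_pm; auto.
Qed.

Lemma is_partial_phi_y th : 0 < pm (X th) ->
  is_partial phi y th (- fsum m (fun i => Dpm i (X th)) / pm (X th)).
Proof.
  intro Hpos. unfold is_partial.
  apply (derivable_pt_lim_ext (fun t => - ln (pm (fun v => X th v + t)))).
  { intro t. unfold phi. rewrite pyS_eq_pm. f_equal. f_equal. apply pm_ext. intros v Hv.
    rewrite X_upd_y; auto. }
  assert (E0 : pm (fun v => X th v + 0) = pm (X th)) by (apply pm_ext; intros; ring).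
  replace (- fsum m (fun i => Dpm i (X th)) / pm (X th)) with
     (- (fsum m (fun i => Dpm i (X th)) / pm (fun v => X th v + 0))) by (rewrite E0; field; lra).
  apply (derivable_pt_lim_opp_ln (fun t => pm (fun v => X th v + t))); [|rewrite E0; auto].
  apply derivable_pt_lim_pm_diag.
Qed.

Lemma pm_X_pos th : (forall k, Rabs (th k) < pm_pos_radius / 2) -> 0 < pm (X th).
Proof.
  intro H. apply pm_pos. intros v Hv. unfold X.
  eapply Rle_trans; [apply Rabs_triang|]. rewrite Rabs_Ropp.
  pose proof (H y); pose proof (H (Lp v)). lra.
Qed.


Lemma upd_0_opp_0 i : upd (fun _ => 0) i (- 0) = (fun _ => 0).
Proof. apply functional_extensionality. intro j. unfold upd. destruct (Nat.eqb j i); ring. Qed.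

Lemma X_upd0_Lp p t : (p < m)%nat -> forall v, (v < m)%nat ->
  X (upd (fun _ => 0) (Lp p) t) v = upd (fun _ => 0) p (- t) v.
Proof. intros Hp v Hv. rewrite X_upd_Lp; auto. unfold upd, X. destruct (Nat.eqb v p); ring. Qed.

Lemma X_upd0_y t : forall v, (v < m)%nat -> X (upd (fun _ => 0) y t) v = t.
Proof. intros v Hv. rewrite X_upd_y; auto. unfold X. ring. Qed.

Lemma X_upd0_out j t : ~ In j Sl -> forall v, (v < m)%nat -> X (upd (fun _ => 0) j t) v = 0.
Proof. intros Hj v Hv. rewrite X_upd_out; auto. unfold X. ring. Qed.

Lemma fsum_over_support g : (forall j, (j < n)%nat -> ~ In j Sl -> g j = 0) ->
  fsum n g = g y + fsum m (fun q => g (Lp q)).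
Proof.
  intro Hz. rewrite (fsum_eq_lsum n Sl g), (lsum_remove Sl y g), lsum_nth, hm by auto. reflexivity.
Qed.

Definition K : R := INR (S m).
Definition A0 : R := a0 + (INR m - 1) * b0.

Lemma K_pos : 0 < K.
Proof. apply lt_0_INR. lia. Qed.

Lemma fsum_Dpm_0 : fsum m (fun i => Dpm i (fun _ => 0)) = INR m * G0.
Proof. rewrite <- fsum_const. apply fsum_ext. intros; apply Dpm_0; auto. Qed.

Lemma D2pm_0 i j : (i < m)%nat -> (j < m)%nat ->
  D2pm i j (fun _ => 0) = if Nat.eqb i j then a0 else b0.
Proof.
  intros Hi Hj. destruct (Nat.eqb_spec i j) as [->|Hne];
    [apply D2pm_0_diag|apply D2pm_0_offdiag]; auto.
Qed.

Lemma fsum_eqb_a0_b0 p : (p < m)%nat -> fsum m (fun q => if Nat.eqb q p then a0 else b0) = A0.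
Proof.
  intro Hp. rewrite (fsum_split_at m _ p Hp), Nat.eqb_refl.
  rewrite (fsum_ext m _ (fun q => if Nat.eqb q p then 0 else b0)).
  - rewrite fsum_const_except by auto. unfold A0; ring.
  - intros q Hq. destruct (Nat.eqb q p); auto.
Qed.

Lemma fsum_D2pm_0_row p : (p < m)%nat -> fsum m (fun q => D2pm p q (fun _ => 0)) = A0.
Proof.
  intro Hp. rewrite <- (fsum_eqb_a0_b0 p Hp). apply fsum_ext. intros q Hq.
  rewrite D2pm_0, Nat.eqb_sym; auto.
Qed.

Lemma fsum_D2pm_0_col q : (q < m)%nat -> fsum m (fun i => D2pm i q (fun _ => 0)) = A0.
Proof.
  intro Hq. rewrite <- (fsum_eqb_a0_b0 q Hq). apply fsum_ext. intros i Hi. apply D2pm_0; auto.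
Qed.

Section Hessian.

Variable H : nat -> nat -> R.
Hypothesis hH : is_hessian n phi (fun _ => 0) H.

Let delta := pm_pos_radius / 2.

Lemma delta_pos : 0 < delta.
Proof. unfold delta. pose proof pm_pos_radius_pos. lra. Qed.

Lemma hessian_entry_out_col i j : (i < n)%nat -> (j < n)%nat -> ~ In j Sl -> H i j = 0.
Proof.
  intros Hi Hj Hn. apply (is_hessian_entry n phi H i j (fun _ => 0) 0 delta); auto.
  - apply delta_pos.
  - intros th _. apply is_partial_phi_out; auto.
  - apply derivable_pt_lim_const.
Qed.

Lemma hessian_entry_out_row i j : (i < n)%nat -> (j < n)%nat -> ~ In i Sl -> H i j = 0.
Proof.
  intros Hi Hj Hn. destruct (in_dec Nat.eq_dec j Sl) as [Hin|Hnin]; [|apply hessian_entry_out_col; auto].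
  assert (Hpath : forall t v, (v < m)%nat -> X (upd (fun _ => 0) i t) v = X (fun _ => 0) v)
    by (intros; rewrite X_upd0_out; auto; unfold X; ring).
  destruct (Nat.eq_dec j y) as [->|Hne].
  - apply (is_hessian_entry n phi H i y (fun th => - fsum m (fun q => Dpm q (X th)) / pm (X th)) 0 delta);
      auto; [apply delta_pos| |].
    + intros th Hth. apply is_partial_phi_y, pm_X_pos, Hth.
    + apply (derivable_pt_lim_ext (fun _ => - fsum m (fun q => Dpm q (X (fun _ => 0))) / pm (X (fun _ => 0))));
        [|apply derivable_pt_lim_const].
      intro t. rewrite (pm_ext _ (X (upd (fun _ => 0) i t))) by (intros; rewrite Hpath; auto).
      f_equal. f_equal. apply fsum_ext. intros q Hq. apply Dpm_ext; auto. intros; rewrite Hpath; auto.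
  - destruct (Lp_surj j Hin Hne) as [q [Hq <-]].
    apply (is_hessian_entry n phi H i (Lp q) (fun th => Dpm q (X th) / pm (X th)) 0 delta);
      auto; [apply delta_pos| |].
    + intros th Hth. apply is_partial_phi_Lp, pm_X_pos; auto.
    + apply (derivable_pt_lim_ext (fun _ => Dpm q (X (fun _ => 0)) / pm (X (fun _ => 0))));
        [|apply derivable_pt_lim_const].
      intro t. rewrite (pm_ext _ (X (upd (fun _ => 0) i t))), (Dpm_ext q _ (X (upd (fun _ => 0) i t)));
        auto; intros; rewrite Hpath; auto.
Qed.

Lemma hessian_entry_Lp_Lp p q : (p < m)%nat -> (q < m)%nat ->
  H (Lp p) (Lp q) = G0 ^ 2 * K ^ 2 - D2pm p q (fun _ => 0) * K.
Proof.
  intros Hp Hq. pose proof K_pos.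
  apply (is_hessian_entry n phi H (Lp p) (Lp q) (fun th => Dpm q (X th) / pm (X th)) _ delta);
    auto using Lp_lt; [apply delta_pos| |].
  { intros th Hth. apply is_partial_phi_Lp, pm_X_pos; auto. }
  apply (derivable_pt_lim_ext (fun t => Dpm q (upd (fun _ => 0) p (- t)) / pm (upd (fun _ => 0) p (- t)))).
  { intro t. rewrite (pm_ext (X (upd (fun _ => 0) (Lp p) t)) (upd (fun _ => 0) p (- t))),
      (Dpm_ext q (X (upd (fun _ => 0) (Lp p) t)) (upd (fun _ => 0) p (- t)));
      auto using X_upd0_Lp. }
  assert (Hd := derivable_pt_lim_div _ _ 0 _ _
     (derivable_pt_lim_comp_opp _ _ (is_partial_Dpm p q (fun _ => 0) Hp Hq))
     (derivable_pt_lim_comp_opp _ _ (is_partial_pm p (fun _ => 0) Hp))).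
  unfold div_fct in Hd. rewrite upd_0_opp_0, pm_0, Dpm_0, Dpm_0 in Hd by auto. fold K in Hd.
  replace (G0 ^ 2 * K ^ 2 - D2pm p q (fun _ => 0) * K) with
    ((- D2pm p q (fun _ => 0) * / K - - G0 * G0) / (/ K)²) by (unfold Rsqr; field; lra).
  apply Hd. apply Rinv_neq_0_compat. lra.
Qed.

Lemma hessian_entry_Lp_y p : (p < m)%nat -> H (Lp p) y = A0 * K - INR m * G0 ^ 2 * K ^ 2.
Proof.
  intros Hp. pose proof K_pos.
  apply (is_hessian_entry n phi H (Lp p) y (fun th => - fsum m (fun q => Dpm q (X th)) / pm (X th)) _ delta);
    auto using Lp_lt; [apply delta_pos| |].
  { intros th Hth. apply is_partial_phi_y, pm_X_pos; auto. }
  apply (derivable_pt_lim_ext (fun t => - fsum m (fun q => Dpm q (upd (fun _ => 0) p (- t)))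
                                         / pm (upd (fun _ => 0) p (- t)))).
  { intro t. rewrite (pm_ext (X (upd (fun _ => 0) (Lp p) t)) (upd (fun _ => 0) p (- t)))
      by auto using X_upd0_Lp.
    f_equal. f_equal. apply fsum_ext. intros q Hq. symmetry. apply Dpm_ext; auto using X_upd0_Lp. }
  assert (Hnum : derivable_pt_lim (fun t => - fsum m (fun q => Dpm q (upd (fun _ => 0) p (- t)))) 0 A0).
  { replace A0 with (- fsum m (fun q => - D2pm p q (fun _ => 0))).
    2:{ rewrite (fsum_ext m _ (fun q => -1 * D2pm p q (fun _ => 0))) by (intros; ring).
        rewrite fsum_scal, fsum_D2pm_0_row by auto. ring. }
    apply (derivable_pt_lim_opp (fun t => fsum m (fun q => Dpm q (upd (fun _ => 0) p (- t))))).
    apply (derivable_pt_lim_fsum m (fun q t => Dpm q (upd (fun _ => 0) p (- t)))). intros q Hq.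
    apply (derivable_pt_lim_comp_opp (fun s => Dpm q (upd (fun _ => 0) p s))), is_partial_Dpm; auto. }
  assert (Hd := derivable_pt_lim_div _ _ 0 _ _ Hnum
     (derivable_pt_lim_comp_opp _ _ (is_partial_pm p (fun _ => 0) Hp))).
  unfold div_fct in Hd. rewrite upd_0_opp_0, pm_0, Dpm_0, fsum_Dpm_0 in Hd by auto. fold K in Hd.
  replace (A0 * K - INR m * G0 ^ 2 * K ^ 2) with
    ((A0 * / K - - G0 * - (INR m * G0)) / (/ K)²) by (unfold Rsqr; field; lra).
  apply Hd. apply Rinv_neq_0_compat. lra.
Qed.

Lemma derivable_pt_lim_pm_const :
  derivable_pt_lim (fun t => pm (fun _ => t)) 0 (INR m * G0).
Proof.
  rewrite <- fsum_Dpm_0.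
  apply (derivable_pt_lim_ext (fun t => pm (fun v => (fun _ => 0) v + t)));
    [intro; apply pm_ext; intros; ring|].
  apply derivable_pt_lim_pm_diag.
Qed.

Lemma hessian_entry_y_Lp q : (q < m)%nat -> H y (Lp q) = A0 * K - INR m * G0 ^ 2 * K ^ 2.
Proof.
  intros Hq. pose proof K_pos.
  apply (is_hessian_entry n phi H y (Lp q) (fun th => Dpm q (X th) / pm (X th)) _ delta);
    auto using Lp_lt; [apply delta_pos| |].
  { intros th Hth. apply is_partial_phi_Lp, pm_X_pos; auto. }
  apply (derivable_pt_lim_ext (fun t => Dpm q (fun _ => t) / pm (fun _ => t))).
  { intro t. rewrite (pm_ext (X (upd (fun _ => 0) y t)) (fun _ => t)),
      (Dpm_ext q (X (upd (fun _ => 0) y t)) (fun _ => t)); auto using X_upd0_y. }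
  assert (Hd := derivable_pt_lim_div _ _ 0 _ _ (derivable_pt_lim_Dpm_diag q Hq) derivable_pt_lim_pm_const).
  unfold div_fct in Hd. rewrite fsum_D2pm_0_col, pm_0, Dpm_0 in Hd by auto. fold K in Hd.
  replace (A0 * K - INR m * G0 ^ 2 * K ^ 2) with
    ((A0 * / K - INR m * G0 * G0) / (/ K)²) by (unfold Rsqr; field; lra).
  apply Hd. apply Rinv_neq_0_compat. lra.
Qed.

Lemma hessian_entry_y_y : H y y = INR m ^ 2 * G0 ^ 2 * K ^ 2 - INR m * A0 * K.
Proof.
  pose proof K_pos.
  apply (is_hessian_entry n phi H y y (fun th => - fsum m (fun q => Dpm q (X th)) / pm (X th)) _ delta);
    auto; [apply delta_pos| |].
  { intros th Hth. apply is_partial_phi_y, pm_X_pos; auto. }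
  apply (derivable_pt_lim_ext (fun t => - fsum m (fun q => Dpm q (fun _ => t)) / pm (fun _ => t))).
  { intro t. rewrite (pm_ext (X (upd (fun _ => 0) y t)) (fun _ => t)) by auto using X_upd0_y.
    f_equal. f_equal. apply fsum_ext. intros q Hq. symmetry. apply Dpm_ext; auto using X_upd0_y. }
  assert (Hnum : derivable_pt_lim (fun t => - fsum m (fun q => Dpm q (fun _ => t))) 0 (- (INR m * A0))).
  { apply (derivable_pt_lim_opp (fun t => fsum m (fun q => Dpm q (fun _ => t)))).
    rewrite <- fsum_const, (fsum_ext m (fun _ => A0) (fun q => fsum m (fun i => D2pm i q (fun _ => 0))))
      by (intros; symmetry; apply fsum_D2pm_0_col; auto).
    apply (derivable_pt_lim_fsum m (fun q t => Dpm q (fun _ => t))). intros q Hq.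
    apply derivable_pt_lim_Dpm_diag; auto. }
  assert (Hd := derivable_pt_lim_div _ _ 0 _ _ Hnum derivable_pt_lim_pm_const).
  unfold div_fct in Hd. rewrite pm_0, (fsum_ext m _ (fun _ => G0)), fsum_const in Hd
    by (intros; apply Dpm_0; auto). fold K in Hd.
  replace (INR m ^ 2 * G0 ^ 2 * K ^ 2 - INR m * A0 * K) with
    ((- (INR m * A0) * / K - INR m * G0 * - (INR m * G0)) / (/ K)²) by (unfold Rsqr; field; lra).
  apply Hd. apply Rinv_neq_0_compat. lra.
Qed.

End Hessian.

Lemma hessian_symmetric H i j : is_hessian n phi (fun _ => 0) H -> (i < n)%nat -> (j < n)%nat ->
  H i j = H j i.
Proof.
  intros hH Hi Hj.
  destruct (in_dec Nat.eq_dec i Sl) as [Si|Si];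
    [|rewrite hessian_entry_out_row, hessian_entry_out_col; auto].
  destruct (in_dec Nat.eq_dec j Sl) as [Sj|Sj];
    [|rewrite (hessian_entry_out_col H hH i j), (hessian_entry_out_row H hH j i); auto].
  destruct (Nat.eq_dec i y) as [->|Hiy]; destruct (Nat.eq_dec j y) as [->|Hjy]; auto.
  - destruct (Lp_surj j Sj Hjy) as [q [Hq <-]]. rewrite hessian_entry_y_Lp, hessian_entry_Lp_y; auto.
  - destruct (Lp_surj i Si Hiy) as [p [Hp <-]]. rewrite hessian_entry_y_Lp, hessian_entry_Lp_y; auto.
  - destruct (Lp_surj i Si Hiy) as [p [Hp <-]]. destruct (Lp_surj j Sj Hjy) as [q [Hq <-]].
    rewrite !hessian_entry_Lp_Lp, !D2pm_0, Nat.eqb_sym; auto.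
Qed.

Lemma hessian_offdiag_signs H : (1 <= m)%nat -> is_hessian n phi (fun _ => 0) H ->
  (forall i j, (i < n)%nat -> (j < n)%nat -> i <> j -> H i j <= 0) ->
  A0 * K - INR m * G0 ^ 2 * K ^ 2 <= 0 /\ (2 <= INR m -> G0 ^ 2 * K ^ 2 - b0 * K <= 0).
Proof.
  intros Hm hH Hneg. pose proof (Lp_in 0 ltac:(lia)) as [S0 N0]. split.
  - rewrite <- (hessian_entry_Lp_y H hH 0) by lia. apply Hneg; auto using Lp_lt with arith.
  - intro H2. assert (Hm2 : (2 <= m)%nat) by (apply INR_le; simpl; lra).
    rewrite <- (D2pm_0_offdiag 0 1), <- (hessian_entry_Lp_Lp H hH 0 1) by lia.
    apply Hneg; try apply Lp_lt; try lia. intro E. apply Lp_inj in E; lia.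
Qed.

Lemma hessian_abs_row_sum_le H i : (1 <= m)%nat -> is_hessian n phi (fun _ => 0) H ->
  (forall i j, (i < n)%nat -> (j < n)%nat -> i <> j -> H i j <= 0) -> (i < n)%nat ->
  fsum n (fun j => Rabs (H i j)) <= K ^ 2 * (G0 ^ 2 * K ^ 2).
Proof.
  intros Hm hH Hneg Hi.
  destruct (in_dec Nat.eq_dec i Sl) as [Si|Si].
  2:{ rewrite (fsum_ext n _ (fun _ => 0)), fsum_0.
      - apply Rmult_le_pos; [|apply Rmult_le_pos]; apply pow2_ge_0.
      - intros j Hj. rewrite hessian_entry_out_row, Rabs_R0; auto. }
  destruct (hessian_offdiag_signs H Hm hH Hneg) as [Hc1 Hc2].
  pose proof K_pos. pose proof (a0_b0_relation Hm) as Hab.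
  assert (Ec1 : A0 * K - INR m * G0 ^ 2 * K ^ 2
               = a0 * K + (INR m - 1) * (b0 * K) - INR m * (G0 ^ 2 * K ^ 2)) by (unfold A0; ring).
  destruct (hessian_abs_sums_le (INR m) K (G0 ^ 2 * K ^ 2) (a0 * K) (b0 * K)) as [Hy HL].
  { destruct (Nat.eq_dec m 1) as [->|Hm2]; [left; reflexivity|right].
    replace 2 with (INR 2) by reflexivity. apply le_INR. lia. }
  { apply S_INR. }
  { apply Rmult_le_pos; apply pow2_ge_0. }
  { replace (2 * (a0 * K) + (INR m - 1) * (b0 * K)) with ((2 * a0 + (INR m - 1) * b0) * K) by ring.
    rewrite Hab. ring. }
  { rewrite <- Ec1. exact Hc1. }
  { auto. }
  rewrite (fsum_over_support (fun j => Rabs (H i j)))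
    by (intros; rewrite hessian_entry_out_col, Rabs_R0; auto).
  destruct (Nat.eq_dec i y) as [->|Hiy].
  - rewrite (hessian_entry_y_y H hH),
      (fsum_ext m _ (fun _ => Rabs (A0 * K - INR m * G0 ^ 2 * K ^ 2))), fsum_const
      by (intros; rewrite (hessian_entry_y_Lp H hH); auto).
    replace (INR m ^ 2 * G0 ^ 2 * K ^ 2 - INR m * A0 * K)
      with (INR m ^ 2 * (G0 ^ 2 * K ^ 2) - INR m * (a0 * K + (INR m - 1) * (b0 * K))) by (unfold A0; ring).
    rewrite Ec1. lra.
  - destruct (Lp_surj i Si Hiy) as [p [Hp <-]].
    rewrite (hessian_entry_Lp_y H hH), (fsum_split_at m _ p Hp), (hessian_entry_Lp_Lp H hH),
      D2pm_0_diag by auto.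
    rewrite (fsum_ext m _ (fun q => if Nat.eqb q p then 0 else Rabs (G0 ^ 2 * K ^ 2 - b0 * K))).
    + rewrite fsum_const_except, Ec1 by auto. lra.
    + intros q Hq. destruct (Nat.eqb_spec q p) as [->|Hne]; auto.
      rewrite (hessian_entry_Lp_Lp H hH), D2pm_0_offdiag; auto.
Qed.

Lemma spectral_norm_hessian_le H s : (1 <= m)%nat -> is_hessian n phi (fun _ => 0) H ->
  (forall i j, (i < n)%nat -> (j < n)%nat -> i <> j -> H i j <= 0) ->
  is_spectral_norm n H s -> s <= K ^ 4 * G0 ^ 2.
Proof.
  intros Hm hH Hneg Hs. replace (K ^ 4 * G0 ^ 2) with (K ^ 2 * (G0 ^ 2 * K ^ 2)) by ring.
  apply (spectral_norm_le_Schur n H); auto.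
  - apply Rmult_le_pos; [|apply Rmult_le_pos]; apply pow2_ge_0.
  - intros i Hi. apply hessian_abs_row_sum_le; auto.
  - intros j Hj. rewrite (fsum_ext n _ (fun i => Rabs (H j i))).
    + apply hessian_abs_row_sum_le; auto.
    + intros i Hi. rewrite hessian_symmetric; auto.
Qed.

End Reparametrization.

End Integrals.

End Density.

Theorem mainTheorem18 (F f f' : R -> R) (n : nat) (S : list nat)
  (hf' : forall x, derivable_pt_lim f x (f' x))
  (hf'c : continuity f')
  (hcdf : is_cdf_with_density F f)
  (hmean : improper_int (fun z => z * f z) 0)
  (hlim : forall eps, 0 < eps -> exists M, forall x, M <= Rabs x -> Rabs (f x) < eps)
  (hdui : dui_permitted F f f' (length S - 1))
  (hS : NoDup S) (hSN : forall u, In u S -> (u < n)%nat)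
  (hk : (2 <= length S)%nat)
  (hneg : forall v, In v S -> forall H,
      is_hessian n (fun th => - ln (pyS F f S v th)) (fun _ => 0) H ->
      forall i j, (i < n)%nat -> (j < n)%nat -> i <> j -> H i j <= 0) :
  forall y, In y S -> forall H,
    is_hessian n (fun th => - ln (pyS F f S y th)) (fun _ => 0) H ->
    forall s, is_spectral_norm n H s ->
      s <= INR (length S) ^ 4 *
           (Iint (fun z => f z ^ 2 * F z ^ (length S - 2))) ^ 2.
Proof.
  intros y hy H hH s hs.
  destruct (f_bounded f f' hf' hlim) as [Mf hMf].
  assert (hm := length_remove_NoDup S y hS hy).
  assert (Hb := spectral_norm_hessian_le F f f' hf' hcdf hlim hf'c _ Mf hMf hdui S y n hS hy hSN hm
                  H s ltac:(lia) hH (hneg y hy H hH) hs).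
  unfold K, G0 in Hb. replace (Datatypes.S (length S - 1)) with (length S) in Hb by lia.
  replace (length S - 2)%nat with (pred (length S - 1)) by lia.
  exact Hb.
Qed.
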